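(* For $i=1,2$, let $F_i(x,t,u,p,q)$, $H_i(x,t,u)$ satisfy the regularity hypotheses (continuous, $1$-periodic in $x$, with $F_u,F_p,F_q,H_t,H_u,H_{tu},H_{uu}$ continuous), and let $u_i\in C^1$ be solutions of $u_i=I(a,b,F_i(u_i),H_i(u_i))$ on $[0,T]$ with the same initial data $a,b$ and $M_1(u_i,T)\le K$. Assume $H_1(x,0,u)=H_2(x,0,u)$, and on $S=S(T,K)$ $\max_S\{|(F_1)_u|,|(F_1)_p|,|(F_1)_q|,|(H_1)_u|,|(H_1)_{tu}|,|(H_1)_{uu}|\}\le K$, $\max_S\{|F_2-F_1|,|H_2-H_1|,|(H_2-H_1)_t|,|(H_2-H_1)_u|\}\le\varepsilon$. Then there is $C>0$ depending monotone increasingly only on $T$ and $K$ with $M_1(u_2-u_1,T)\le CT\varepsilon$.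
   Context: $I(a,b,f,h)(x,t)=\tfrac12\{a(x+t)+a(x-t)\}+\tfrac12\int_{x-t}^{x+t}b(y)dy+\tfrac12\int_0^t\int_{x-(t-\tau)}^{x+(t-\tau)}f(y,\tau)dyd\tau+\tfrac12\int_0^t\{h(x+(t-\tau),\tau)-h(x-(t-\tau),\tau)\}d\tau$; $F(u)(x,t)=F(x,t,u,u_x,u_t)$, $H(u)(x,t)=H(x,t,u(x,t))$. $S(T,r)=\{(x,t,u,p,q):0\le t\le T,|u|+|p|+|q|\le r\}$ (resp. $\{(x,t,u):0\le t\le T,|u|\le r\}$ for $H$). $M_1(u,T)=M_0(u,T)+M_0(u_x,T)+M_0(u_t,T)$, $M_0(u,T)=\sup_{0\le t\le T}\sup_x|u(x,t)|$. *)

From Stdlib Require Import Reals ClassicalEpsilon.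
Open Scope R_scope.

(* It is the unique v with RiemannInt pr = v for some integrability proof pr
   (RiemannInt is proof-irrelevant); only used on continuous integrands. *)
Definition RInt (f : R -> R) (a b : R) : R :=
  epsilon (inhabits 0) (fun v => exists pr : Riemann_integrable f a b, RiemannInt pr = v).

Definition Iop (a b : R -> R) (f h : R -> R -> R) (x t : R) : R :=
  / 2 * (a (x + t) + a (x - t))
  + / 2 * RInt b (x - t) (x + t)
  + / 2 * RInt (fun tau => RInt (fun y => f y tau) (x - (t - tau)) (x + (t - tau))) 0 t
  + / 2 * RInt (fun tau => h (x + (t - tau)) tau - h (x - (t - tau)) tau) 0 t.

Definition Fop (F : R -> R -> R -> R -> R -> R) (u ux ut : R -> R -> R) : R -> R -> R :=
  fun x t => F x t (u x t) (ux x t) (ut x t).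
Definition Hop (H : R -> R -> R -> R) (u : R -> R -> R) : R -> R -> R :=
  fun x t => H x t (u x t).

(* one-sided-aware derivative of f at t, relative to the set D *)
Definition deriv_within (D : R -> Prop) (f : R -> R) (t l : R) : Prop :=
  forall eps, 0 < eps -> exists delta, 0 < delta /\
    forall h, h <> 0 -> Rabs h < delta -> D (t + h) ->
      Rabs ((f (t + h) - f t) / h - l) < eps.

Definition inT (T : R) (t : R) : Prop := 0 <= t <= T.

Definition cont2 (T : R) (f : R -> R -> R) : Prop :=
  forall x t, inT T t -> forall eps, 0 < eps -> exists d, 0 < d /\
    forall x' t', inT T t' -> Rabs (x' - x) < d -> Rabs (t' - t) < d ->
      Rabs (f x' t' - f x t) < eps.

Definition cont3 (T : R) (f : R -> R -> R -> R) : Prop :=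
  forall x t u, inT T t -> forall eps, 0 < eps -> exists d, 0 < d /\
    forall x' t' u', inT T t' -> Rabs (x' - x) < d -> Rabs (t' - t) < d ->
      Rabs (u' - u) < d -> Rabs (f x' t' u' - f x t u) < eps.

Definition cont5 (T : R) (f : R -> R -> R -> R -> R -> R) : Prop :=
  forall x t u p q, inT T t -> forall eps, 0 < eps -> exists d, 0 < d /\
    forall x' t' u' p' q', inT T t' -> Rabs (x' - x) < d -> Rabs (t' - t) < d ->
      Rabs (u' - u) < d -> Rabs (p' - p) < d -> Rabs (q' - q) < d ->
      Rabs (f x' t' u' p' q' - f x t u p q) < eps.

Definition regF (T : R) (F Fu Fp Fq : R -> R -> R -> R -> R -> R) : Prop :=
  cont5 T F /\ cont5 T Fu /\ cont5 T Fp /\ cont5 T Fq /\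
  (forall x t u p q, inT T t -> F (x + 1) t u p q = F x t u p q) /\
  (forall x t u p q, inT T t ->
     derivable_pt_lim (fun v => F x t v p q) u (Fu x t u p q) /\
     derivable_pt_lim (fun v => F x t u v q) p (Fp x t u p q) /\
     derivable_pt_lim (fun v => F x t u p v) q (Fq x t u p q)).

Definition regH (T : R) (H Ht Hu Htu Huu : R -> R -> R -> R) : Prop :=
  cont3 T H /\ cont3 T Ht /\ cont3 T Hu /\ cont3 T Htu /\ cont3 T Huu /\
  (forall x t u, inT T t -> H (x + 1) t u = H x t u) /\
  (forall x t u, inT T t ->
     deriv_within (inT T) (fun s => H x s u) t (Ht x t u) /\
     derivable_pt_lim (fun v => H x t v) u (Hu x t u) /\
     derivable_pt_lim (fun v => Ht x t v) u (Htu x t u) /\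
     derivable_pt_lim (fun v => Hu x t v) u (Huu x t u)).

Definition isC1 (T : R) (u ux ut : R -> R -> R) : Prop :=
  cont2 T u /\ cont2 T ux /\ cont2 T ut /\
  (forall x t, inT T t ->
     derivable_pt_lim (fun y => u y t) x (ux x t) /\
     deriv_within (inT T) (fun s => u x s) t (ut x t)).

Definition bnd (T : R) (f : R -> R -> R) : Prop :=
  exists B, forall x t, inT T t -> Rabs (f x t) <= B.

Definition M0 (f : R -> R -> R) (T : R) : R :=
  epsilon (inhabits 0)
    (is_lub (fun r => exists x t, inT T t /\ r = Rabs (f x t))).

Definition M1 (u ux ut : R -> R -> R) (T : R) : R := M0 u T + M0 ux T + M0 ut T.

(* "M_1(u,T) <= K" in the sense of the supremum (finite and <= K). *)
Definition M1_le (u ux ut : R -> R -> R) (T K : R) : Prop :=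
  bnd T u /\ bnd T ux /\ bnd T ut /\ M1 u ux ut T <= K.

Definition diff2 (f g : R -> R -> R) : R -> R -> R := fun x t => f x t - g x t.

Definition inS5 (T r x t u p q : R) : Prop := inT T t /\ Rabs u + Rabs p + Rabs q <= r.
Definition inS3 (T r x t u : R) : Prop := inT T t /\ Rabs u <= r.

(* Let w = u2 - u1.  Both solutions share the data a, b, so the d'Alembert part of I cancels:
     w(x,t) = 1/2 W f (x,t) + 1/2 (P h (x,t) - P h~ (-x,t)),
   where f = F2(u2) - F1(u1), h = H2(u2) - H1(u1), h~(y,t) = h(-y,t), W integrates over the
   backward characteristic cone and P along the characteristic y = x + (t - tau).  From
   H1 = H2 at t = 0 one gets w(.,0) = 0, hence h(.,0) = 0, and the time derivative k of h is
   given by the chain rule.  With m = |w| + |w_x| + |w_t|, the bounds on the derivatives of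
   F1, H1 and the eps-closeness of F2, H2 give |f| <= eps + K m and |k| <= (1+K) eps + (K+K^2) m.

   The proof is a weighted-sup (Bielecki) argument.  If m <= N e^(lam tau) on the strip, the
   estimates of W and P against the weight A + B e^(lam s) — for w itself and, through bounds
   on difference quotients, for w_x and w_t — give m e^(-lam t) <= Q + N/2 with
   Q = (T+3)(2+K) T eps, as soon as lam = lamf T K.  For the least such N this forces N <= 2Q,
   whence M1(w) <= 6 Q e^(lam T) = C(T,K) T eps. *)

From Pilot Require Import Defs.
From Stdlib Require Import Reals Lra ClassicalEpsilon Classical.
From Coquelicot Require Import Coquelicot.
Open Scope R_scope.

Notation IntD := Defs.RInt.
Notation Int := Coquelicot.RInt.RInt.

Section IntegrationToolkit.
Implicit Types (f g psi : R -> R).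

(* On integrable functions the two integrals agree (RiemannInt is proof-irrelevant). *)
Lemma IntD_Int f a b : ex_RInt f a b -> IntD f a b = Int f a b.
Proof.
  intros H. unfold Defs.RInt.
  destruct (epsilon_spec (inhabits 0)
     (fun v => exists pr : Riemann_integrable f a b, RiemannInt pr = v)) as [pr E].
  - exists (RiemannInt (ex_RInt_Reals_0 _ _ _ H)). eexists. reflexivity.
  - rewrite <- E. symmetry. apply RInt_Reals.
Qed.

Lemma continuity_pt_eps f x :
  (forall e, 0 < e -> exists d, 0 < d /\ forall y, Rabs (y - x) < d -> Rabs (f y - f x) < e) ->
  continuity_pt f x.
Proof.
  intros H e He. destruct (H e He) as [d [Hd Hy]]. exists d. split; [lra|].
  intros y [_ Hy2]. apply Hy. exact Hy2.
Qed.

Lemma eps_continuity_pt f x : continuity_pt f x ->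
  forall e, 0 < e -> exists d, 0 < d /\ forall y, Rabs (y - x) < d -> Rabs (f y - f x) < e.
Proof.
  intros H e He. destruct (H e He) as [d [Hd Hy]]. exists d. split; [lra|].
  intros y Hyx. destruct (Req_dec y x) as [->|Hne].
  - rewrite Rminus_diag, Rabs_R0. lra.
  - apply Hy. split; [split; [exact I|auto]|exact Hyx].
Qed.

Definition cont_on (a b : R) (g : R -> R) : Prop :=
  forall z, a <= z <= b -> forall e, 0 < e -> exists d, 0 < d /\
    forall z', a <= z' <= b -> Rabs (z' - z) < d -> Rabs (g z' - g z) < e.

Lemma cont_on_sub a b g a' b' : cont_on a b g -> a <= a' -> b' <= b -> cont_on a' b' g.
Proof.
  intros Hc H1 H2 z Hz e He. destruct (Hc z ltac:(lra) e He) as [d [Hd Hy]].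
  exists d. split; auto. intros z' Hz'. apply Hy. lra.
Qed.

(* The projection of R onto [a, b]: composing with it extends a function continuous on
   [a, b] to a function continuous everywhere, which Coquelicot knows how to integrate. *)
Definition clamp (a b z : R) := Rmax a (Rmin b z).

Lemma clamp_in a b z : a <= b -> a <= clamp a b z <= b.
Proof. intros. unfold clamp, Rmax, Rmin. repeat destruct Rle_dec; lra. Qed.

Lemma clamp_id a b z : a <= z <= b -> clamp a b z = z.
Proof. intros. unfold clamp, Rmax, Rmin. repeat destruct Rle_dec; lra. Qed.

Lemma clamp_lip a b z z' : a <= b -> Rabs (clamp a b z' - clamp a b z) <= Rabs (z' - z).
Proof.
  intros. unfold clamp, Rmax, Rmin. repeat destruct Rle_dec;
  unfold Rabs; repeat destruct Rcase_abs; lra.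
Qed.

Lemma cont_on_clamp a b g z : a <= b -> cont_on a b g ->
  continuity_pt (fun z => g (clamp a b z)) z.
Proof.
  intros Hab Hc. apply continuity_pt_eps. intros e He.
  destruct (Hc (clamp a b z) (clamp_in a b z Hab) e He) as [d [Hd Hy]].
  exists d. split; auto. intros y Hyz. apply Hy. apply clamp_in; auto.
  eapply Rle_lt_trans. apply clamp_lip; auto. auto.
Qed.

Lemma cont_on_ex_RInt a b g : a <= b -> cont_on a b g -> ex_RInt g a b.
Proof.
  intros Hab Hc. apply ex_RInt_ext with (f := fun z => g (clamp a b z)).
  - intros x Hx. rewrite Rmin_left in Hx by lra. rewrite Rmax_right in Hx by lra.
    rewrite clamp_id; auto; lra.
  - apply (ex_RInt_continuous (V:=R_CompleteNormedModule)). intros z _.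
    apply continuity_pt_filterlim. apply cont_on_clamp; auto.
Qed.

Lemma ex_Int_continuous f a b : (forall z, continuity_pt f z) -> ex_RInt f a b.
Proof.
  intros H. apply (ex_RInt_continuous (V:=R_CompleteNormedModule)). intros z _.
  apply continuity_pt_filterlim. apply H.
Qed.

Lemma Int_minus f g a b : ex_RInt f a b -> ex_RInt g a b ->
  Int (fun x => f x - g x) a b = Int f a b - Int g a b.
Proof. exact (RInt_minus (V:=R_CompleteNormedModule) f g a b). Qed.

Lemma Int_opp f a b : ex_RInt f a b -> Int (fun x => - f x) a b = - Int f a b.
Proof. exact (RInt_opp (V:=R_CompleteNormedModule) f a b). Qed.

Lemma Int_scal f a b c : ex_RInt f a b -> Int (fun x => c * f x) a b = c * Int f a b.
Proof. exact (RInt_scal (V:=R_CompleteNormedModule) f a b c). Qed.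

Lemma Int_Chasles f a b c : ex_RInt f a b -> ex_RInt f b c -> Int f a b + Int f b c = Int f a c.
Proof. exact (RInt_Chasles (V:=R_CompleteNormedModule) f a b c). Qed.

Lemma Int_swap f a b : ex_RInt f a b -> Int f b a = - Int f a b.
Proof. intros H. symmetry. exact (opp_RInt_swap (V:=R_CompleteNormedModule) f a b H). Qed.

Lemma Int_point f a : Int f a a = 0.
Proof. exact (RInt_point (V:=R_CompleteNormedModule) a f). Qed.

Lemma ex_Int_minus f g a b : ex_RInt f a b -> ex_RInt g a b -> ex_RInt (fun x => f x - g x) a b.
Proof. exact (ex_RInt_minus (V:=R_NormedModule) f g a b). Qed.

Lemma ex_Int_scal f a b c : ex_RInt f a b -> ex_RInt (fun x => c * f x) a b.
Proof. exact (ex_RInt_scal (V:=R_NormedModule) f a b c). Qed.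

Lemma ex_Int_swap f a b : ex_RInt f a b -> ex_RInt f b a.
Proof. exact (ex_RInt_swap (V:=R_NormedModule) f a b). Qed.

Lemma Int_abs_le_const f a b M : ex_RInt f a b ->
  (forall t, Rmin a b <= t <= Rmax a b -> Rabs (f t) <= M) ->
  Rabs (Int f a b) <= Rabs (b - a) * M.
Proof.
  intros Hf HM. destruct (Rle_dec a b) as [Hab|Hab].
  - rewrite (Rabs_right (b - a)) by lra. apply abs_RInt_le_const; auto.
    intros t Ht. apply HM. rewrite Rmin_left, Rmax_right; lra.
  - rewrite <- (Ropp_involutive (Int f a b)), <- Int_swap, Rabs_Ropp by auto.
    rewrite (Rabs_left (b - a)) by lra. replace (- (b - a)) with (a - b) by ring.
    apply abs_RInt_le_const; [lra| apply ex_Int_swap; auto|].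
    intros t Ht. apply HM. rewrite Rmin_right, Rmax_left; lra.
Qed.

Lemma Int_abs_le g psi a b : a <= b -> ex_RInt g a b -> ex_RInt psi a b ->
  (forall t, a <= t <= b -> Rabs (g t) <= psi t) -> Rabs (Int g a b) <= Int psi a b.
Proof.
  intros Hab Hg Hp H. apply Rabs_le. split.
  - rewrite <- (Ropp_involutive (Int g a b)). apply Ropp_le_contravar.
    rewrite <- Int_opp by auto. apply RInt_le; auto. apply (ex_RInt_opp (V:=R_NormedModule)); auto.
    intros x Hx. specialize (H x ltac:(lra)). apply Rabs_le_between in H. lra.
  - apply RInt_le; auto. intros x Hx. specialize (H x ltac:(lra)). apply Rabs_le_between in H. lra.
Qed.

Lemma Int_shift_diff f a b eta : (forall u v, ex_RInt f u v) ->
  Int f (a + eta) (b + eta) - Int f a b = Int f b (b + eta) - Int f a (a + eta).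
Proof.
  intros Hex. pose proof (Int_Chasles f a b (b + eta) (Hex _ _) (Hex _ _)).
  pose proof (Int_Chasles f a (a + eta) (b + eta) (Hex _ _) (Hex _ _)). lra.
Qed.

Lemma Int_widen_diff f a b d : (forall u v, ex_RInt f u v) ->
  Int f (a - d) (b + d) - Int f a b = Int f (a - d) a + Int f b (b + d).
Proof.
  intros Hex. pose proof (Int_Chasles f (a - d) a (b + d) (Hex _ _) (Hex _ _)).
  pose proof (Int_Chasles f a b (b + d) (Hex _ _) (Hex _ _)). lra.
Qed.

End IntegrationToolkit.

Lemma small_radius a b c d : 0 < a -> 0 < b -> 0 < c -> 0 < d ->
  exists m, 0 < m /\ m < a /\ m < b /\ m < c /\ m < d.
Proof.
  intros. exists (Rmin (Rmin a b) (Rmin c d) / 2).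
  assert (0 < Rmin (Rmin a b) (Rmin c d)) by (repeat apply Rmin_pos; auto).
  pose proof (Rmin_l (Rmin a b) (Rmin c d)). pose proof (Rmin_r (Rmin a b) (Rmin c d)).
  pose proof (Rmin_l a b). pose proof (Rmin_r a b). pose proof (Rmin_l c d).
  pose proof (Rmin_r c d). lra.
Qed.

(* Differentiability implies continuity (Stdlib's form needs a proof object). *)
Lemma deriv_continuous g v l : derivable_pt_lim g v l -> continuity_pt g v.
Proof. intros H. apply (derivable_continuous_pt g v (exist _ l H)). Qed.

Lemma mvt_lipschitz g gp a b L :
  (forall v, Rmin a b <= v <= Rmax a b -> derivable_pt_lim g v (gp v)) ->
  (forall v, Rmin a b <= v <= Rmax a b -> Rabs (gp v) <= L) ->
  Rabs (g b - g a) <= L * Rabs (b - a).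
Proof.
  intros Hd HL. destruct (MVT_gen g a b gp) as [c [Hc E]].
  - intros x Hx. apply is_derive_Reals. apply Hd. lra.
  - intros x Hx. apply (deriv_continuous _ _ (gp x)). apply Hd. lra.
  - rewrite E, Rabs_mult. apply Rmult_le_compat_r. apply Rabs_pos. apply HL. lra.
Qed.

Lemma deriv_within_minus D g1 g2 t l1 l2 : deriv_within D g1 t l1 -> deriv_within D g2 t l2 ->
  deriv_within D (fun s => g1 s - g2 s) t (l1 - l2).
Proof.
  intros H1 H2 e He. destruct (H1 (e/2) ltac:(lra)) as [d1 [Hd1 Q1]].
  destruct (H2 (e/2) ltac:(lra)) as [d2 [Hd2 Q2]].
  exists (Rmin d1 d2). split. apply Rmin_pos; auto.
  intros h Hh Hhl HD. pose proof (Rmin_l d1 d2). pose proof (Rmin_r d1 d2).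
  specialize (Q1 h Hh ltac:(lra) HD). specialize (Q2 h Hh ltac:(lra) HD).
  replace ((g1 (t + h) - g2 (t + h) - (g1 t - g2 t)) / h - (l1 - l2))
    with (((g1 (t + h) - g1 t) / h - l1) - ((g2 (t + h) - g2 t) / h - l2)) by (field; auto).
  eapply Rle_lt_trans. apply Rabs_triang. rewrite Rabs_Ropp. lra.
Qed.

Lemma deriv_within_opp D g t l : deriv_within D g t l -> deriv_within D (fun s => - g s) t (- l).
Proof.
  intros H e He. destruct (H e He) as [d [Hd Q]]. exists d. split; auto.
  intros h Hh Hhl HD. specialize (Q h Hh Hhl HD).
  replace ((- g (t + h) - - g t) / h - - l) with (- ((g (t + h) - g t) / h - l)) by (field; auto).
  rewrite Rabs_Ropp. auto.
Qed.

Lemma deriv_within_of_deriv D g t l : derivable_pt_lim g t l -> deriv_within D g t l.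
Proof.
  intros H e He. destruct (H e He) as [d Q]. exists d. split. apply cond_pos.
  intros h Hh Hhl _. apply Q; auto.
Qed.

Lemma deriv_within_cont_on T g gp a b : 0 <= a -> b <= T ->
  (forall s, a <= s <= b -> deriv_within (inT T) g s (gp s)) -> cont_on a b g.
Proof.
  intros Ha Hb Hd z Hz e He.
  destruct (Hd z Hz 1 ltac:(lra)) as [d [Hd0 Hq]].
  set (L := Rabs (gp z) + 2). assert (HL : 0 < L) by (pose proof (Rabs_pos (gp z)); unfold L; lra).
  exists (Rmin d (e / L)). split. { apply Rmin_pos; auto. apply Rdiv_lt_0_compat; auto. }
  intros z' Hz' Hzz. pose proof (Rmin_l d (e / L)). pose proof (Rmin_r d (e / L)).
  destruct (Req_dec z' z) as [->|Hne]. { rewrite Rminus_diag, Rabs_R0. lra. }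
  specialize (Hq (z' - z) ltac:(lra) ltac:(lra)).
  replace (z + (z' - z)) with z' in Hq by ring. specialize (Hq ltac:(unfold inT; lra)).
  set (q := (g z' - g z) / (z' - z)) in Hq.
  assert (Hqb : Rabs q <= L) by (pose proof (Rabs_triang_inv q (gp z)); unfold L; lra).
  replace (g z' - g z) with (q * (z' - z)) by (unfold q; field; lra). rewrite Rabs_mult.
  apply Rle_lt_trans with (L * Rabs (z' - z)). { apply Rmult_le_compat_r; auto using Rabs_pos. }
  replace e with (L * (e / L)) by (field; lra). apply Rmult_lt_compat_l; auto. lra.
Qed.

(* A nonpositive derivative within [0, T] on [a, b] makes g nonincreasing on [a, b]
   (mean value theorem applied to g composed with the projection onto [a, b]). *)
Lemma deriv_within_nonpos_decr T g gp a b : 0 <= a -> a <= b -> b <= T ->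
  (forall s, a <= s <= b -> deriv_within (inT T) g s (gp s)) ->
  (forall s, a <= s <= b -> gp s <= 0) -> g b <= g a.
Proof.
  intros Ha Hab Hb Hd Hn.
  destruct (Req_dec a b) as [->|Hne]. lra.
  destruct (MVT_gen (fun z => g (clamp a b z)) a b gp) as [c [Hcr E]].
  - intros x Hx. rewrite Rmin_left, Rmax_right in Hx by lra.
    apply is_derive_Reals. intros e He.
    destruct (Hd x ltac:(lra) e He) as [d [Hd0 Hq]].
    destruct (small_radius d (x - a) (b - x) 1) as [r [Hr [Hr1 [Hr2 [Hr3 _]]]]]; try lra.
    exists (mkposreal _ Hr). simpl. intros h Hh Hhl.
    apply Rabs_def2 in Hhl as [Hh1 Hh2].
    rewrite (clamp_id a b (x + h)), (clamp_id a b x) by lra.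
    apply Hq; auto. apply Rabs_def1; lra. unfold inT; lra.
  - intros x _. apply cont_on_clamp; auto. apply (deriv_within_cont_on T g gp); auto.
  - rewrite Rmin_left, Rmax_right in Hcr by lra.
    rewrite (clamp_id a b b), (clamp_id a b a) in E by lra.
    specialize (Hn c Hcr). assert (gp c * (b - a) <= 0) by (apply Rmult_le_0_r; lra). lra.
Qed.

Lemma deriv_within_dominated T g gp kp kpp a b : 0 <= a -> a <= b -> b <= T ->
  (forall s, a <= s <= b -> deriv_within (inT T) g s (gp s)) ->
  (forall s, derivable_pt_lim kp s (kpp s)) ->
  (forall s, a <= s <= b -> Rabs (gp s) <= kpp s) ->
  Rabs (g b - g a) <= kp b - kp a.
Proof.
  intros Ha Hab Hb Hd Hk Hbd. apply Rabs_le. split.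
  - cut (- g b - kp b <= - g a - kp a). lra.
    apply (deriv_within_nonpos_decr T (fun s => - g s - kp s) (fun s => - gp s - kpp s));
      auto; intros s Hs.
    + apply deriv_within_minus. apply deriv_within_opp; auto. apply deriv_within_of_deriv; auto.
    + specialize (Hbd s Hs). apply Rabs_le_between in Hbd. lra.
  - cut (g b - kp b <= g a - kp a). lra.
    apply (deriv_within_nonpos_decr T (fun s => g s - kp s) (fun s => gp s - kpp s));
      auto; intros s Hs.
    + apply deriv_within_minus; auto. apply deriv_within_of_deriv; auto.
    + specialize (Hbd s Hs). apply Rabs_le_between in Hbd. lra.
Qed.

Lemma abs_le_of_approx D G :
  (forall e, 0 < e -> exists r, Rabs (D - r) < e /\ Rabs r <= G + e) -> Rabs D <= G.
Proof.
  intros H. apply Rnot_lt_le. intros Hlt.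
  destruct (H ((Rabs D - G) / 2) ltac:(lra)) as [r [H1 H2]].
  pose proof (Rabs_triang_inv D r). lra.
Qed.

Lemma quotient_abs_le phi x del G : del <> 0 ->
  Rabs (phi (x + del) - phi x) <= Rabs del * G -> Rabs ((phi (x + del) - phi x) / del) <= G.
Proof.
  intros Hd H. unfold Rdiv. rewrite Rabs_mult, Rabs_inv.
  pose proof (Rabs_pos_lt del Hd).
  apply Rmult_le_reg_r with (Rabs del); auto. rewrite Rmult_assoc, Rinv_l by lra. lra.
Qed.

Lemma deriv_abs_le_of_increments phi x D gb :
  derivable_pt_lim phi x D ->
  (exists d0, 0 < d0 /\ forall eta, 0 < eta < d0 -> Rabs (phi (x + eta) - phi x) <= eta * gb eta) ->
  continuity_pt gb 0 -> Rabs D <= gb 0.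
Proof.
  intros Hd [d0 [Hd0 Hb]] Hc. apply abs_le_of_approx. intros e He.
  destruct (eps_continuity_pt _ _ Hc e He) as [d1 [Hd1 C1]].
  destruct (Hd e He) as [d2 Q].
  destruct (small_radius d0 d1 d2 1) as [m [Hm [Hm0 [Hm1 [Hm2 _]]]]]; auto using cond_pos; try lra.
  exists ((phi (x + m) - phi x) / m). split.
  - rewrite Rabs_minus_sym. apply Q. lra. rewrite Rabs_right; lra.
  - specialize (C1 m ltac:(rewrite Rminus_0_r, Rabs_right; lra)). apply Rabs_def2 in C1.
    assert (Rabs ((phi (x + m) - phi x) / m) <= gb m).
    { apply quotient_abs_le. lra. rewrite (Rabs_right m) by lra. apply Hb. lra. }
    lra.
Qed.

Lemma deriv_within_abs_le_of_increments T phi t D gb : 0 < T -> inT T t ->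
  deriv_within (inT T) phi t D ->
  (exists d0, 0 < d0 /\ forall del, del <> 0 -> Rabs del < d0 -> inT T (t + del) ->
      Rabs (phi (t + del) - phi t) <= Rabs del * gb (Rabs del)) ->
  continuity_pt gb 0 -> Rabs D <= gb 0.
Proof.
  intros HT Ht Hd [d0 [Hd0 Hb]] Hc. apply abs_le_of_approx. intros e He.
  destruct (eps_continuity_pt _ _ Hc e He) as [d1 [Hd1 C1]].
  destruct (Hd e He) as [d2 [Hd2 Q]].
  destruct (small_radius d0 d1 d2 (T / 2)) as [m [Hm [Hm0 [Hm1 [Hm2 HmT]]]]]; auto; try lra.
  assert (exists del, Rabs del = m /\ inT T (t + del)) as [del [Hdm Hdin]].
  { unfold inT in *. destruct (Rle_dec (t + m) T).
    - exists m. split. apply Rabs_right; lra. lra.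
    - exists (- m). rewrite Rabs_Ropp, Rabs_right by lra. split; lra. }
  assert (Hdel : del <> 0) by (intros ->; rewrite Rabs_R0 in Hdm; lra).
  exists ((phi (t + del) - phi t) / del). split.
  - rewrite Rabs_minus_sym. apply Q; auto. lra.
  - specialize (C1 m ltac:(rewrite Rminus_0_r, Rabs_right; lra)). apply Rabs_def2 in C1.
    assert (Rabs ((phi (t + del) - phi t) / del) <= gb m).
    { apply quotient_abs_le; auto. rewrite <- Hdm. apply Hb; auto. lra. }
    lra.
Qed.

Lemma cont2_unif_time T (f : R -> R -> R) a b t0 : cont2 T f -> inT T t0 -> a <= b ->
  forall e, 0 < e -> exists d, 0 < d /\ forall y t, a <= y <= b -> inT T t ->
    Rabs (t - t0) < d -> Rabs (f y t - f y t0) < e.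
Proof.
  intros Hc Ht0 Hab e He.
  assert (Local : forall z, exists d1, 0 < d1 /\ forall y t, Rabs (y - z) < d1 -> inT T t ->
             Rabs (t - t0) < d1 -> Rabs (f y t - f y t0) < e).
  { intros z. destruct (Hc z t0 Ht0 (e/2) ltac:(lra)) as [d1 [Hd1 Q]].
    exists d1. split; auto. intros y t Hy Ht Htt.
    pose proof (Q y t Ht Hy Htt). pose proof (Q y t0 Ht0 Hy ltac:(rewrite Rminus_diag, Rabs_R0; lra)).
    replace (f y t - f y t0) with ((f y t - f z t0) - (f y t0 - f z t0)) by ring.
    eapply Rle_lt_trans. apply Rabs_triang. rewrite Rabs_Ropp. lra. }
  (* E s: the conclusion holds uniformly on [a, s] *)
  set (E := fun s => a <= s <= b /\ exists d, 0 < d /\ forall y t, a <= y <= s -> inT T t ->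
             Rabs (t - t0) < d -> Rabs (f y t - f y t0) < e).
  assert (Ea : E a).
  { split. lra. destruct (Local a) as [d1 [Hd1 Q]]. exists d1. split; auto.
    intros y t Hy Ht Htt. apply Q; auto. replace (y - a) with 0 by lra. rewrite Rabs_R0. lra. }
  destruct (completeness E) as [s [Hub Hlub]].
  { exists b. intros s [Hs _]. lra. }
  { exists a. exact Ea. }
  assert (Has : a <= s) by (apply Hub; auto).
  assert (Hsb : s <= b) by (apply Hlub; intros z [Hz _]; lra).
  destruct (Local s) as [d1 [Hd1 Q1]].
  assert (Hex : exists s1, E s1 /\ s - d1 < s1).
  { apply NNPP. intros Hn. assert (s <= s - d1). apply Hlub. intros z Hz.
    apply Rnot_lt_le. intros Hlt. apply Hn. exists z. auto. lra. }
  destruct Hex as [s1 [[Hs1 [ds [Hds Qs]]] Hs1d]].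
  set (s' := Rmin b (s + d1 / 2)).
  assert (Es' : E s').
  { split. unfold s', Rmin. destruct Rle_dec; lra.
    exists (Rmin ds d1). split. apply Rmin_pos; auto.
    intros y t Hy Ht Htt. pose proof (Rmin_l ds d1). pose proof (Rmin_r ds d1).
    destruct (Rle_dec y s1).
    - apply Qs; auto. lra. lra.
    - apply Q1; auto. assert (s' <= s + d1/2) by (unfold s'; apply Rmin_r).
      apply Rabs_def1; lra. lra. }
  assert (s' <= s) by (apply Hub; auto).
  assert (Hs'b : s' = b) by (unfold s', Rmin in *; destruct Rle_dec; lra).
  rewrite Hs'b in Es'. destruct Es' as [_ [d [Hd Qd]]]. exists d. split; auto.
Qed.

Lemma mvt_point g gp U V : (forall v, derivable_pt_lim g v (gp v)) ->
  exists c, Rabs (c - U) <= Rabs (V - U) /\ g V - g U = gp c * (V - U).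
Proof.
  intros Hd. destruct (MVT_gen g U V gp) as [c [Hc Ec]].
  - intros x _. apply is_derive_Reals. apply Hd.
  - intros x _. apply (deriv_continuous _ _ (gp x)). apply Hd.
  - exists c. split; auto. revert Hc. unfold Rmin, Rmax.
    destruct Rle_dec; unfold Rabs; repeat destruct Rcase_abs; lra.
Qed.

Lemma mult_abs_small a b e M : 0 < M -> Rabs a <= e / M -> Rabs b <= M -> Rabs a * Rabs b <= e.
Proof.
  intros HM Ha Hb. apply Rle_trans with (e / M * M).
  apply Rmult_le_compat; auto using Rabs_pos. right. field. lra.
Qed.

Lemma deriv_within_chain T (G Gt Gu : R -> R -> R) (u ut : R -> R) tau :
  inT T tau ->
  (forall v, deriv_within (inT T) (fun s => G s v) tau (Gt tau v)) ->
  (forall s v, inT T s -> derivable_pt_lim (fun w => G s w) v (Gu s v)) ->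
  (forall e, 0 < e -> exists d, 0 < d /\ forall s v, inT T s -> Rabs (s - tau) < d ->
      Rabs (v - u tau) < d -> Rabs (Gu s v - Gu tau (u tau)) < e) ->
  deriv_within (inT T) u tau (ut tau) ->
  deriv_within (inT T) (fun s => G s (u s)) tau (Gt tau (u tau) + Gu tau (u tau) * ut tau).
Proof.
  intros Htau HG HD HC Hu eps Heps.
  set (U := u tau). set (Lu := Gu tau U). set (Q := Rabs (ut tau) + 1).
  assert (HQ : 0 < Q) by (unfold Q; pose proof (Rabs_pos (ut tau)); lra).
  pose proof (Rabs_pos Lu) as HLu.
  destruct (Hu 1 ltac:(lra)) as [d1 [Hd1 Q1]].
  destruct (HC (eps / 3 / Q)) as [d2 [Hd2 Q2]]. { apply Rdiv_lt_0_compat; lra. }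
  destruct (Hu (eps / 3 / (Rabs Lu + 1))) as [d3 [Hd3 Q3]]. { apply Rdiv_lt_0_compat; lra. }
  destruct (HG U (eps / 3) ltac:(lra)) as [d4 [Hd4 Q4]].
  destruct (small_radius (Rmin d1 d3) d4 d2 (d2 / Q)) as [dd [Hdd [M13 [M4 [M2 M2']]]]];
    try (apply Rmin_pos || apply Rdiv_lt_0_compat); auto.
  pose proof (Rmin_l d1 d3). pose proof (Rmin_r d1 d3).
  exists dd. split; auto. intros h Hh Hhl Hin.
  (* q is the difference quotient of u; G(tau+h, .) has slope Gu(tau+h, c) between U and u(tau+h) *)
  set (q := (u (tau + h) - U) / h).
  assert (Eq : u (tau + h) - U = q * h) by (unfold q; field; auto).
  assert (Hq1 : Rabs (q - ut tau) < 1) by (apply Q1; auto; lra).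
  assert (Hq3 : Rabs (q - ut tau) < eps / 3 / (Rabs Lu + 1)) by (apply Q3; auto; lra).
  assert (HqQ : Rabs q <= Q) by (pose proof (Rabs_triang_inv q (ut tau)); unfold Q; lra).
  assert (Hdu : Rabs (u (tau + h) - U) < d2).
  { rewrite Eq, Rabs_mult. apply Rle_lt_trans with (Q * Rabs h).
    apply Rmult_le_compat_r; auto using Rabs_pos.
    replace d2 with (Q * (d2 / Q)) by (field; lra). apply Rmult_lt_compat_l; lra. }
  destruct (mvt_point (fun w => G (tau + h) w) (fun w => Gu (tau + h) w) U (u (tau + h)))
    as [c [Hc Ec]]; [intros; apply HD; auto|].
  assert (HC2 : Rabs (Gu (tau + h) c - Lu) < eps / 3 / Q).
  { apply Q2; auto. replace (tau + h - tau) with h by ring. lra. fold U. lra. }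
  assert (H4 : Rabs ((G (tau + h) U - G tau U) / h - Gt tau U) < eps / 3) by (apply Q4; auto; lra).
  replace ((G (tau + h) (u (tau + h)) - G tau U) / h - (Gt tau U + Lu * ut tau))
    with ((Gu (tau + h) c - Lu) * q + Lu * (q - ut tau) + ((G (tau + h) U - G tau U) / h - Gt tau U)).
  2:{ replace (G (tau + h) (u (tau + h))) with (G (tau + h) U + Gu (tau + h) c * (u (tau + h) - U)) by lra.
      unfold q. field. auto. }
  eapply Rle_lt_trans. apply Rabs_triang. eapply Rle_lt_trans. apply Rplus_le_compat_r. apply Rabs_triang.
  rewrite !Rabs_mult.
  pose proof (mult_abs_small (Gu (tau + h) c - Lu) q (eps / 3) Q HQ ltac:(lra) HqQ).
  pose proof (mult_abs_small (q - ut tau) Lu (eps / 3) (Rabs Lu + 1) ltac:(lra) ltac:(lra) ltac:(lra)).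
  lra.
Qed.

Lemma abs_between a b v M : Rmin a b <= v <= Rmax a b -> Rabs a <= M -> Rabs b <= M -> Rabs v <= M.
Proof. unfold Rmin, Rmax. destruct Rle_dec; unfold Rabs; repeat destruct Rcase_abs; lra. Qed.

(* Of two numbers, the one of smaller absolute value; it lies between them, so replacing
   coordinates one at a time through it keeps every intermediate point in the ball. *)
Definition absmin (a b : R) := if Rle_dec (Rabs a) (Rabs b) then a else b.

Lemma absmin_l a b : Rabs (absmin a b) <= Rabs a.
Proof. unfold absmin. destruct Rle_dec; lra. Qed.
Lemma absmin_r a b : Rabs (absmin a b) <= Rabs b.
Proof. unfold absmin. destruct Rle_dec; lra. Qed.
Lemma absmin_sum a b : Rabs (absmin a b - a) + Rabs (b - absmin a b) = Rabs (b - a).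
Proof. unfold absmin. destruct Rle_dec; rewrite ?Rminus_diag, ?Rabs_R0; ring. Qed.

Lemma abs_sum6 x1 x2 x3 x4 x5 x6 : Rabs (x1 + x2 + x3 + x4 + x5 + x6) <=
  Rabs x1 + Rabs x2 + Rabs x3 + Rabs x4 + Rabs x5 + Rabs x6.
Proof. repeat (eapply Rle_trans; [apply Rabs_triang|]; apply Rplus_le_compat_r). lra. Qed.

(* The segment
   path a -> c -> b, with c the coordinatewise absmin, stays inside the ball. *)
Lemma lipschitz3 (F Fu Fp Fq : R -> R -> R -> R) K L a1 a2 a3 b1 b2 b3 :
  (forall u p q, derivable_pt_lim (fun v => F v p q) u (Fu u p q)) ->
  (forall u p q, derivable_pt_lim (fun v => F u v q) p (Fp u p q)) ->
  (forall u p q, derivable_pt_lim (fun v => F u p v) q (Fq u p q)) ->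
  (forall u p q, Rabs u + Rabs p + Rabs q <= K ->
     Rabs (Fu u p q) <= L /\ Rabs (Fp u p q) <= L /\ Rabs (Fq u p q) <= L) ->
  Rabs a1 + Rabs a2 + Rabs a3 <= K -> Rabs b1 + Rabs b2 + Rabs b3 <= K ->
  Rabs (F b1 b2 b3 - F a1 a2 a3) <= L * (Rabs (b1 - a1) + Rabs (b2 - a2) + Rabs (b3 - a3)).
Proof.
  intros D1 D2 D3 HL HA HB.
  pose proof (absmin_l a1 b1). pose proof (absmin_r a1 b1). pose proof (absmin_sum a1 b1).
  pose proof (absmin_l a2 b2). pose proof (absmin_r a2 b2). pose proof (absmin_sum a2 b2).
  pose proof (absmin_l a3 b3). pose proof (absmin_r a3 b3). pose proof (absmin_sum a3 b3).
  set (c1 := absmin a1 b1) in *. set (c2 := absmin a2 b2) in *. set (c3 := absmin a3 b3) in *.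
  assert (Step : forall g gp x y M, (forall v, derivable_pt_lim g v (gp v)) ->
            Rabs x <= M -> Rabs y <= M ->
            (forall v, Rabs v <= M -> Rabs (gp v) <= L) -> Rabs (g y - g x) <= L * Rabs (y - x)).
  { intros g gp x y M Hg Hx Hy Hgp. apply (mvt_lipschitz g gp); auto.
    intros v Hv. apply Hgp. apply (abs_between x y); auto. }
  assert (S1 : Rabs (F c1 a2 a3 - F a1 a2 a3) <= L * Rabs (c1 - a1)).
  { apply (Step (fun v => F v a2 a3) (fun v => Fu v a2 a3) a1 c1 (Rabs a1)); auto; try lra. intros v Hv. apply HL. lra. }
  assert (S2 : Rabs (F c1 c2 a3 - F c1 a2 a3) <= L * Rabs (c2 - a2)).
  { apply (Step (fun v => F c1 v a3) (fun v => Fp c1 v a3) a2 c2 (Rabs a2)); auto; try lra. intros v Hv. apply HL. lra. }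
  assert (S3 : Rabs (F c1 c2 c3 - F c1 c2 a3) <= L * Rabs (c3 - a3)).
  { apply (Step (fun v => F c1 c2 v) (fun v => Fq c1 c2 v) a3 c3 (Rabs a3)); auto; try lra. intros v Hv. apply HL. lra. }
  assert (S4 : Rabs (F b1 c2 c3 - F c1 c2 c3) <= L * Rabs (b1 - c1)).
  { apply (Step (fun v => F v c2 c3) (fun v => Fu v c2 c3) c1 b1 (Rabs b1)); auto; try lra. intros v Hv. apply HL. lra. }
  assert (S5 : Rabs (F b1 b2 c3 - F b1 c2 c3) <= L * Rabs (b2 - c2)).
  { apply (Step (fun v => F b1 v c3) (fun v => Fp b1 v c3) c2 b2 (Rabs b2)); auto; try lra. intros v Hv. apply HL. lra. }
  assert (S6 : Rabs (F b1 b2 b3 - F b1 b2 c3) <= L * Rabs (b3 - c3)).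
  { apply (Step (fun v => F b1 b2 v) (fun v => Fq b1 b2 v) c3 b3 (Rabs b3)); auto; try lra. intros v Hv. apply HL. lra. }
  replace (F b1 b2 b3 - F a1 a2 a3) with
    ((F b1 b2 b3 - F b1 b2 c3) + (F b1 b2 c3 - F b1 c2 c3) + (F b1 c2 c3 - F c1 c2 c3)
     + (F c1 c2 c3 - F c1 c2 a3) + (F c1 c2 a3 - F c1 a2 a3) + (F c1 a2 a3 - F a1 a2 a3)) by ring.
  eapply Rle_trans. apply abs_sum6. nra.
Qed.

Lemma affine_exp_cont A B l p c y : continuity_pt (fun y => A + B * exp (l * (p * y + c))) y.
Proof.
  apply continuity_pt_plus. apply continuity_pt_const. intros ? ?; reflexivity.
  apply continuity_pt_scal. apply continuity_pt_comp with (f1 := fun y => l * (p * y + c)).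
  apply derivable_continuous_pt. apply derivable_pt_scal. apply derivable_pt_plus.
  apply derivable_pt_scal. apply derivable_pt_id. apply derivable_pt_const.
  apply derivable_continuous_pt. apply derivable_pt_exp.
Qed.

Lemma Int_affine_exp A B l p c s0 s1 : l <> 0 -> p <> 0 ->
  Int (fun y => A + B * exp (l * (p * y + c))) s0 s1 =
  A * (s1 - s0) + B / (l * p) * (exp (l * (p * s1 + c)) - exp (l * (p * s0 + c))).
Proof.
  intros Hl Hp. apply (is_RInt_unique (V:=R_CompleteNormedModule)).
  set (Prim := fun y => A * y + B / (l * p) * exp (l * (p * y + c))).
  replace (A * (s1 - s0) + B / (l * p) * (exp (l * (p * s1 + c)) - exp (l * (p * s0 + c))))
    with (minus (Prim s1) (Prim s0)) by (unfold minus, plus, opp, Prim; simpl; field; split; auto).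
  apply (is_RInt_derive (V:=R_CompleteNormedModule) Prim).
  - intros x _. unfold Prim. auto_derive. auto. field. split; auto.
  - intros x _. apply continuity_pt_filterlim. apply affine_exp_cont.
Qed.

Definition weight (A B l s : R) := A + B * exp (l * s).
Definition weight_prim (A B l s : R) := A * s + B / l * exp (l * s).

Lemma weight_cont A B l s : continuity_pt (weight A B l) s.
Proof.
  apply continuity_pt_ext with (f := fun y => A + B * exp (l * (1 * y + 0))).
  { intros y. unfold weight. do 3 f_equal. ring. }
  apply affine_exp_cont.
Qed.

Lemma ex_Int_weight A B l a b : ex_RInt (weight A B l) a b.
Proof. apply ex_Int_continuous. intros; apply weight_cont. Qed.

Lemma Int_weight A B l a b : 0 < l ->
  Int (weight A B l) a b = weight_prim A B l b - weight_prim A B l a.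
Proof.
  intros Hl. rewrite (RInt_ext _ (fun y => A + B * exp (l * (1 * y + 0)))).
  - rewrite Int_affine_exp by lra. unfold weight_prim.
    rewrite !Rmult_1_l, !Rplus_0_r.
    match goal with |- ?x = ?y => change (@eq R x y) end. field. lra.
  - intros x _. unfold weight. rewrite Rmult_1_l, Rplus_0_r. auto.
Qed.

Lemma weight_nonneg A B l s : 0 <= A -> 0 <= B -> 0 <= weight A B l s.
Proof. unfold weight. pose proof (exp_pos (l * s)). nra. Qed.

Lemma exp_mono a b : a <= b -> exp a <= exp b.
Proof. intros. destruct (Req_dec a b) as [->|]. lra. left. apply exp_increasing. lra. Qed.

Lemma weight_mono A B l s1 s2 : 0 <= B -> 0 < l -> s1 <= s2 -> weight A B l s1 <= weight A B l s2.
Proof.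
  intros HB Hl Hs. unfold weight. apply Rplus_le_compat_l. apply Rmult_le_compat_l; auto.
  apply exp_mono. apply Rmult_le_compat_l; lra.
Qed.

Lemma weight_prim_deriv A B l s : 0 < l -> derivable_pt_lim (weight_prim A B l) s (weight A B l s).
Proof. intros Hl. apply is_derive_Reals. unfold weight_prim, weight. auto_derive. auto. field. lra. Qed.

Lemma weight_prim_cont A B l s : 0 < l -> continuity_pt (weight_prim A B l) s.
Proof. intros Hl. exact (deriv_continuous _ _ _ (weight_prim_deriv A B l s Hl)). Qed.

Lemma weight_prim_mono A B l s1 s2 : 0 <= A -> 0 <= B -> 0 < l -> s1 <= s2 ->
  weight_prim A B l s1 <= weight_prim A B l s2.
Proof.
  intros HA HB Hl Hs. unfold weight_prim. apply Rplus_le_compat. apply Rmult_le_compat_l; auto.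
  apply Rmult_le_compat_l. apply Rmult_le_pos; auto. left; apply Rinv_0_lt_compat; auto.
  apply exp_mono. apply Rmult_le_compat_l; lra.
Qed.

Lemma weight_prim_incr A B l s d : 0 <= B -> 0 < l -> 0 <= d ->
  weight_prim A B l (s + d) - weight_prim A B l s <= d * weight A B l (s + d).
Proof.
  intros HB Hl Hd. destruct (MVT_gen (weight_prim A B l) s (s + d) (weight A B l)) as [c [Hc E]].
  - intros x _. apply is_derive_Reals. apply weight_prim_deriv; auto.
  - intros x _. apply weight_prim_cont; auto.
  - rewrite Rmin_left, Rmax_right in Hc by lra. rewrite E.
    replace (s + d - s) with d by ring. rewrite Rmult_comm.
    apply Rmult_le_compat_l; auto. apply weight_mono; lra.
Qed.

Lemma weight_prim_gain A B l t T : 0 <= A -> 0 <= B -> 0 < l -> 0 <= t <= T ->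
  weight_prim A B l t - weight_prim A B l 0 <= A * T + B / l * exp (l * t).
Proof.
  intros HA HB Hl Ht. unfold weight_prim. rewrite !Rmult_0_r, exp_0.
  assert (0 <= B / l) by (apply Rmult_le_pos; [lra| left; apply Rinv_0_lt_compat; lra]).
  assert (A * t <= A * T) by (apply Rmult_le_compat_l; lra). lra.
Qed.

Lemma cont2_slice T (g : R -> R -> R) tau y : cont2 T g -> inT T tau ->
  continuity_pt (fun y => g y tau) y.
Proof.
  intros Hc Ht. apply continuity_pt_eps. intros e He. destruct (Hc y tau Ht e He) as [d [Hd Q]].
  exists d. split; auto. intros y' Hy'. apply Q; auto. rewrite Rminus_diag, Rabs_R0; auto.
Qed.

Lemma ex_Int_slice T (g : R -> R -> R) tau u v : cont2 T g -> inT T tau ->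
  ex_RInt (fun y => g y tau) u v.
Proof. intros Hc Ht. apply ex_Int_continuous. intros y. apply (cont2_slice T); auto. Qed.

Lemma cont2_segment T (g : R -> R -> R) a b p0 p1 q0 q1 : cont2 T g -> Rabs p1 <= 1 -> Rabs q1 <= 1 ->
  (forall s, a <= s <= b -> inT T (q0 + q1 * s)) ->
  cont_on a b (fun s => g (p0 + p1 * s) (q0 + q1 * s)).
Proof.
  intros Hc Hp Hq Hin z Hz e He. destruct (Hc (p0 + p1 * z) (q0 + q1 * z) (Hin z Hz) e He) as [d [Hd Q]].
  exists d. split; auto. intros z' Hz' Hzz. apply Q; auto.
  - replace (p0 + p1 * z' - (p0 + p1 * z)) with (p1 * (z' - z)) by ring. rewrite Rabs_mult.
    apply Rle_lt_trans with (1 * Rabs (z' - z)). apply Rmult_le_compat_r; auto using Rabs_pos. lra.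
  - replace (q0 + q1 * z' - (q0 + q1 * z)) with (q1 * (z' - z)) by ring. rewrite Rabs_mult.
    apply Rle_lt_trans with (1 * Rabs (z' - z)). apply Rmult_le_compat_r; auto using Rabs_pos. lra.
Qed.

Lemma ex_Int_segment T (g : R -> R -> R) a b p0 p1 q0 q1 : cont2 T g -> a <= b ->
  (p1 = 1 \/ p1 = -1) -> (q1 = 1 \/ q1 = -1) ->
  (forall s, a <= s <= b -> inT T (q0 + q1 * s)) ->
  ex_RInt (fun s => g (p0 + p1 * s) (q0 + q1 * s)) a b.
Proof.
  intros Hc Hab Hp Hq Hin. apply cont_on_ex_RInt; auto. apply (cont2_segment T); auto.
  - destruct Hp as [->| ->]; unfold Rabs; destruct Rcase_abs; lra.
  - destruct Hq as [->| ->]; unfold Rabs; destruct Rcase_abs; lra.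
Qed.

Lemma cont2_minus T (f g : R -> R -> R) : cont2 T f -> cont2 T g -> cont2 T (fun x t => f x t - g x t).
Proof.
  intros Hf Hg x t Htin e He.
  destruct (Hf x t Htin (e/2) ltac:(lra)) as [d1 [Hd1 Q1]].
  destruct (Hg x t Htin (e/2) ltac:(lra)) as [d2 [Hd2 Q2]].
  exists (Rmin d1 d2). split. apply Rmin_pos; auto.
  pose proof (Rmin_l d1 d2). pose proof (Rmin_r d1 d2).
  intros x' t' Ht' Hxx Htt. specialize (Q1 x' t' Ht' ltac:(lra) ltac:(lra)).
  specialize (Q2 x' t' Ht' ltac:(lra) ltac:(lra)).
  replace (f x' t' - g x' t' - (f x t - g x t)) with ((f x' t' - f x t) - (g x' t' - g x t)) by ring.
  eapply Rle_lt_trans. apply Rabs_triang. rewrite Rabs_Ropp. lra.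
Qed.

Lemma cont2_reflect T h : cont2 T h -> cont2 T (fun y t => h (- y) t).
Proof.
  intros Hh x t Htin e He. destruct (Hh (- x) t Htin e He) as [d [Hd Q]].
  exists d. split; auto. intros x' t' Ht' Hxx Htt. apply Q; auto.
  replace (- x' - - x) with (- (x' - x)) by ring. rewrite Rabs_Ropp. auto.
Qed.

Lemma cont2_Fop T F u ux ut : cont5 T F -> cont2 T u -> cont2 T ux -> cont2 T ut ->
  cont2 T (Fop F u ux ut).
Proof.
  intros HF Hu Hx Ht x t Htin e He. unfold Fop.
  destruct (HF x t (u x t) (ux x t) (ut x t) Htin e He) as [d [Hd Q]].
  destruct (Hu x t Htin d Hd) as [d1 [Hd1 Q1]].
  destruct (Hx x t Htin d Hd) as [d2 [Hd2 Q2]].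
  destruct (Ht x t Htin d Hd) as [d3 [Hd3 Q3]].
  destruct (small_radius d d1 d2 d3) as [m [Hm [M1 [M2 [M3 M4]]]]]; auto.
  exists m. split; auto. intros x' t' Ht' Hxx Htt. apply Q; auto; try lra.
  apply Q1; auto; lra. apply Q2; auto; lra. apply Q3; auto; lra.
Qed.

Lemma cont2_Hop T H u : cont3 T H -> cont2 T u -> cont2 T (Hop H u).
Proof.
  intros HH Hu x t Htin e He. unfold Hop.
  destruct (HH x t (u x t) Htin e He) as [d [Hd Q]].
  destruct (Hu x t Htin d Hd) as [d1 [Hd1 Q1]].
  exists (Rmin d d1). split. apply Rmin_pos; auto.
  pose proof (Rmin_l d d1). pose proof (Rmin_r d d1).
  intros x' t' Ht' Hxx Htt. apply Q; auto; try lra. apply Q1; auto; lra.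
Qed.

Lemma Int_moving_ends g1 g0 A0 B0 A1 B1 M ep : A0 <= B0 ->
  (forall u v, ex_RInt g1 u v) -> (forall u v, ex_RInt g0 u v) ->
  (forall y, Rmin A1 A0 <= y <= Rmax A1 A0 -> Rabs (g1 y) <= M) ->
  (forall y, Rmin B0 B1 <= y <= Rmax B0 B1 -> Rabs (g1 y) <= M) ->
  (forall y, A0 <= y <= B0 -> Rabs (g1 y - g0 y) <= ep) ->
  Rabs (Int g1 A1 B1 - Int g0 A0 B0) <= (Rabs (A0 - A1) + Rabs (B1 - B0)) * M + (B0 - A0) * ep.
Proof.
  intros Hab E1 E0 HA HB Hd.
  rewrite <- (Int_Chasles g1 A1 A0 B1), <- (Int_Chasles g1 A0 B0 B1) by auto.
  replace (Int g1 A1 A0 + (Int g1 A0 B0 + Int g1 B0 B1) - Int g0 A0 B0)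
    with (Int g1 A1 A0 + Int g1 B0 B1 + (Int g1 A0 B0 - Int g0 A0 B0)) by ring.
  rewrite <- Int_minus by auto.
  pose proof (Int_abs_le_const g1 A1 A0 M (E1 _ _) HA).
  pose proof (Int_abs_le_const g1 B0 B1 M (E1 _ _) HB).
  pose proof (Int_abs_le_const (fun y => g1 y - g0 y) A0 B0 ep (ex_Int_minus _ _ _ _ (E1 _ _) (E0 _ _))).
  rewrite Rmin_left, Rmax_right, (Rabs_right (B0 - A0)) in H1 by lra.
  specialize (H1 Hd).
  eapply Rle_trans. apply Rabs_triang. eapply Rle_trans. apply Rplus_le_compat_r. apply Rabs_triang.
  lra.
Qed.

Lemma cone_slice_cont T (g : R -> R -> R) x t : cont2 T g -> 0 <= t <= T ->
  cont_on 0 t (fun tau => Int (fun y => g y tau) (x - (t - tau)) (x + (t - tau))).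
Proof.
  intros Hc Ht z Hz e He.
  assert (Hzin : inT T z) by (unfold inT; lra).
  set (a := x - t - 1). set (b := x + t + 1).
  destruct (continuity_ab_maj (fun y => Rabs (g y z)) a b ltac:(unfold a, b; lra)) as [ym [Hym _]].
  { intros c _. apply (continuity_pt_comp (fun y => g y z) Rabs).
    apply (cont2_slice T); auto. apply Rcontinuity_abs. }
  set (M := Rabs (g ym z) + 1).
  assert (HM : 1 <= M) by (pose proof (Rabs_pos (g ym z)); unfold M; lra).
  set (ep := e / (2 * (2 * t + 1))).
  assert (Hep : 0 < ep) by (apply Rdiv_lt_0_compat; lra).
  destruct (cont2_unif_time T g a b z Hc Hzin ltac:(unfold a, b; lra) 1 ltac:(lra)) as [da [Hda Qa]].
  destruct (cont2_unif_time T g a b z Hc Hzin ltac:(unfold a, b; lra) ep Hep) as [db [Hdb Qb]].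
  destruct (small_radius da db (e / (4 * M)) 1) as [d [Hd [Hd1 [Hd2 [Hd3 Hd4]]]]]; auto;
    try (apply Rdiv_lt_0_compat; lra); try lra.
  exists d. split; auto. intros tau Htau Htz.
  assert (Htauin : inT T tau) by (unfold inT; lra).
  assert (Hbd : forall y, a <= y <= b -> Rabs (g y tau) <= M).
  { intros y Hy. specialize (Qa y tau Hy Htauin ltac:(lra)). specialize (Hym y Hy). simpl in Hym.
    pose proof (Rabs_triang_inv (g y tau) (g y z)). unfold M. lra. }
  eapply Rle_lt_trans.
  { apply (Int_moving_ends (fun y => g y tau) (fun y => g y z) _ _ _ _ M ep); try lra.
    - intros; apply (ex_Int_slice T); auto.
    - intros; apply (ex_Int_slice T); auto.
    - intros y Hy. apply Hbd. revert Hy. unfold a, b, Rmin, Rmax. destruct Rle_dec; lra.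
    - intros y Hy. apply Hbd. revert Hy. unfold a, b, Rmin, Rmax. destruct Rle_dec; lra.
    - intros y Hy. left. apply Qb; auto; [unfold a, b; lra | lra]. }
  replace (x - (t - z) - (x - (t - tau))) with (z - tau) by ring.
  replace (x + (t - tau) - (x + (t - z))) with (z - tau) by ring. rewrite Rabs_minus_sym.
  assert (E1 : (Rabs (tau - z) + Rabs (tau - z)) * M <= e / 2).
  { apply Rle_trans with (2 * (e / (4 * M)) * M). apply Rmult_le_compat_r; lra.
    right. field. lra. }
  assert (E2 : (x + (t - z) - (x - (t - z))) * ep < e / 2).
  { apply Rlt_le_trans with ((2 * t + 1) * ep). apply Rmult_lt_compat_r; lra.
    right. unfold ep. field. lra. }
  lra.
Qed.

Definition cone_slice (f : R -> R -> R) x t tau := Int (fun y => f y tau) (x - (t - tau)) (x + (t - tau)).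
Definition cone_int (f : R -> R -> R) x t := Int (cone_slice f x t) 0 t.

Definition char_int (h : R -> R -> R) x t := Int (fun tau => h (x + (t - tau)) tau) 0 t.
Definition char_int_left (h : R -> R -> R) x t := Int (fun tau => h (x - (t - tau)) tau) 0 t.

Lemma ex_Int_cone_slice T (g : R -> R -> R) x t a b : cont2 T g ->
  0 <= a -> a <= b -> b <= t -> t <= T -> ex_RInt (cone_slice g x t) a b.
Proof.
  intros. apply cont_on_ex_RInt; auto. apply (cont_on_sub 0 t); try lra.
  apply (cone_slice_cont T); auto. lra.
Qed.

Lemma ex_Int_char T (h : R -> R -> R) x t a b : cont2 T h ->
  0 <= a -> a <= b -> b <= t -> t <= T -> ex_RInt (fun tau => h (x + (t - tau)) tau) a b.
Proof.
  intros. apply ex_RInt_ext with (f := fun s => h ((x + t) + -1 * s) (0 + 1 * s)).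
  { intros z _. f_equal; ring. }
  apply (ex_Int_segment T); auto. intros s Hs. unfold inT; lra.
Qed.

Lemma ex_Int_char_left T (h : R -> R -> R) x t : cont2 T h -> 0 <= t <= T ->
  ex_RInt (fun tau => h (x - (t - tau)) tau) 0 t.
Proof.
  intros. apply ex_RInt_ext with (f := fun s => h ((x - t) + 1 * s) (0 + 1 * s)).
  { intros z _. f_equal; ring. }
  apply (ex_Int_segment T); auto; try lra. intros s Hs. unfold inT; lra.
Qed.

Lemma char_int_left_reflect h x t : char_int_left h x t = char_int (fun y tau => h (- y) tau) (- x) t.
Proof. unfold char_int_left, char_int. apply RInt_ext. intros z _. f_equal. ring. Qed.

Lemma cone_int_minus T f1 f2 x t : cont2 T f1 -> cont2 T f2 -> 0 <= t <= T ->
  cone_int f2 x t - cone_int f1 x t = cone_int (fun y tau => f2 y tau - f1 y tau) x t.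
Proof.
  intros H1 H2 Ht. unfold cone_int. rewrite <- Int_minus by (apply (ex_Int_cone_slice T); auto; lra).
  apply RInt_ext. intros z Hz. rewrite Rmin_left, Rmax_right in Hz by lra.
  unfold cone_slice. symmetry. apply Int_minus; apply (ex_Int_slice T); auto; unfold inT; lra.
Qed.

Lemma char_int_minus T h1 h2 x t : cont2 T h1 -> cont2 T h2 -> 0 <= t <= T ->
  char_int h2 x t - char_int h1 x t = char_int (fun y tau => h2 y tau - h1 y tau) x t.
Proof. intros. unfold char_int. rewrite <- Int_minus by (apply (ex_Int_char T); auto; lra). reflexivity. Qed.

Lemma char_int_left_minus T h1 h2 x t : cont2 T h1 -> cont2 T h2 -> 0 <= t <= T ->
  char_int_left h2 x t - char_int_left h1 x t = char_int_left (fun y tau => h2 y tau - h1 y tau) x t.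
Proof. intros. unfold char_int_left. rewrite <- Int_minus by (apply (ex_Int_char_left T); auto). reflexivity. Qed.

Lemma Iop_expand T a b g hh x t : cont2 T g -> cont2 T hh -> 0 <= t <= T ->
  Iop a b g hh x t = / 2 * (a (x + t) + a (x - t)) + / 2 * IntD b (x - t) (x + t)
    + / 2 * cone_int g x t + / 2 * (char_int hh x t - char_int_left hh x t).
Proof.
  intros Hg Hh Ht. unfold Iop.
  assert (E1 : IntD (fun tau => IntD (fun y => g y tau) (x - (t - tau)) (x + (t - tau))) 0 t
               = cone_int g x t).
  { assert (Ext : forall z, Rmin 0 t < z < Rmax 0 t ->
       cone_slice g x t z = IntD (fun y => g y z) (x - (t - z)) (x + (t - z))).
    { intros z Hz. rewrite Rmin_left, Rmax_right in Hz by lra. unfold cone_slice. symmetry.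
      apply IntD_Int. apply (ex_Int_slice T); auto. unfold inT; lra. }
    rewrite IntD_Int. unfold cone_int. symmetry. apply RInt_ext. auto.
    eapply ex_RInt_ext. exact Ext. apply (ex_Int_cone_slice T); auto; lra. }
  assert (E2 : IntD (fun tau => hh (x + (t - tau)) tau - hh (x - (t - tau)) tau) 0 t
               = char_int hh x t - char_int_left hh x t).
  { assert (exP := ex_Int_char T hh x t 0 t Hh ltac:(lra) ltac:(lra) ltac:(lra) ltac:(lra)).
    assert (exQ := ex_Int_char_left T hh x t Hh Ht).
    rewrite IntD_Int by (apply ex_Int_minus; auto). apply Int_minus; auto. }
  rewrite E1, E2. ring.
Qed.

Section ConeIntegral.
Variables (T A B l : R) (f : R -> R -> R).
Hypothesis Hc : cont2 T f.
Hypothesis HA : 0 <= A.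
Hypothesis HB : 0 <= B.
Hypothesis Hl : 0 < l.
Hypothesis Hb : forall y tau, inT T tau -> Rabs (f y tau) <= weight A B l tau.

Let Wt := weight A B l.
Let Wp := weight_prim A B l.

Lemma slice_abs_le tau u v : inT T tau -> Rabs (Int (fun y => f y tau) u v) <= Rabs (v - u) * Wt tau.
Proof. intros Ht. apply Int_abs_le_const. apply (ex_Int_slice T); auto. intros; apply Hb; auto. Qed.

Lemma cone_slice_bound x t tau : 0 <= tau <= t -> t <= T -> Rabs (cone_slice f x t tau) <= 2 * (t - tau) * Wt tau.
Proof.
  intros Ht HT. unfold cone_slice. eapply Rle_trans. apply slice_abs_le. unfold inT; lra.
  right. rewrite Rabs_right by lra. ring.
Qed.

(* Translating the cone in x, or enlarging it in t, changes a slice only at its two ends. *)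
Lemma cone_slice_shift x t eta tau : inT T tau ->
  Rabs (cone_slice f (x + eta) t tau - cone_slice f x t tau) <= 2 * Rabs eta * Wt tau.
Proof.
  intros Ht. unfold cone_slice.
  replace (x + eta - (t - tau)) with ((x - (t - tau)) + eta) by ring.
  replace (x + eta + (t - tau)) with ((x + (t - tau)) + eta) by ring.
  rewrite Int_shift_diff by (intros; apply (ex_Int_slice T); auto).
  eapply Rle_trans. apply Rabs_triang. rewrite Rabs_Ropp.
  pose proof (slice_abs_le tau (x + (t - tau)) (x + (t - tau) + eta) Ht).
  pose proof (slice_abs_le tau (x - (t - tau)) (x - (t - tau) + eta) Ht).
  replace (x + (t - tau) + eta - (x + (t - tau))) with eta in H by ring.
  replace (x - (t - tau) + eta - (x - (t - tau))) with eta in H0 by ring. lra.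
Qed.

Lemma cone_slice_widen x t d tau : inT T tau ->
  Rabs (cone_slice f x (t + d) tau - cone_slice f x t tau) <= 2 * Rabs d * Wt tau.
Proof.
  intros Ht. unfold cone_slice.
  replace (x - (t + d - tau)) with ((x - (t - tau)) - d) by ring.
  replace (x + (t + d - tau)) with ((x + (t - tau)) + d) by ring.
  rewrite Int_widen_diff by (intros; apply (ex_Int_slice T); auto).
  eapply Rle_trans. apply Rabs_triang.
  pose proof (slice_abs_le tau (x - (t - tau) - d) (x - (t - tau)) Ht).
  pose proof (slice_abs_le tau (x + (t - tau)) (x + (t - tau) + d) Ht).
  replace (x - (t - tau) - (x - (t - tau) - d)) with d in H by ring.
  replace (x + (t - tau) + d - (x + (t - tau))) with d in H0 by ring. lra.
Qed.

Lemma Int_scaled_weight c t : Int (fun tau => c * Wt tau) 0 t = c * (Wp t - Wp 0).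
Proof. rewrite Int_scal by apply ex_Int_weight. unfold Wt, Wp. rewrite Int_weight; auto. Qed.

Lemma cone_int_bound x t : 0 <= t <= T -> Rabs (cone_int f x t) <= 2 * t * (Wp t - Wp 0).
Proof.
  intros Ht. unfold cone_int. rewrite <- Int_scaled_weight.
  apply Int_abs_le; try lra. apply (ex_Int_cone_slice T); auto; lra.
  apply ex_Int_scal, ex_Int_weight.
  intros tau Htau. eapply Rle_trans. apply cone_slice_bound; lra.
  apply Rmult_le_compat_r. apply weight_nonneg; auto. lra.
Qed.

Lemma cone_int_shift x t eta : 0 <= t <= T ->
  Rabs (cone_int f (x + eta) t - cone_int f x t) <= 2 * Rabs eta * (Wp t - Wp 0).
Proof.
  intros Ht. unfold cone_int. rewrite <- Int_minus by (apply (ex_Int_cone_slice T); auto; lra).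
  rewrite <- Int_scaled_weight. apply Int_abs_le; try lra.
  apply ex_Int_minus; apply (ex_Int_cone_slice T); auto; lra. apply ex_Int_scal, ex_Int_weight.
  intros tau Htau. apply cone_slice_shift. unfold inT; lra.
Qed.

Lemma cone_int_time x t d : 0 <= t -> 0 < d -> t + d <= T ->
  Rabs (cone_int f x (t + d) - cone_int f x t) <= 2 * d * (Wp t - Wp 0) + 2 * d * d * Wt (t + d).
Proof.
  intros Ht Hd HT. unfold cone_int.
  rewrite <- (Int_Chasles _ 0 t (t + d)) by (apply (ex_Int_cone_slice T); auto; lra).
  match goal with |- Rabs (?a + ?b - ?c) <= _ => replace (a + b - c) with ((a - c) + b) by ring end.
  rewrite <- Int_minus by (apply (ex_Int_cone_slice T); auto; lra).
  eapply Rle_trans. apply Rabs_triang. apply Rplus_le_compat.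
  - rewrite <- Int_scaled_weight. apply Int_abs_le; try lra.
    apply ex_Int_minus; apply (ex_Int_cone_slice T); auto; lra. apply ex_Int_scal, ex_Int_weight.
    intros tau Htau. eapply Rle_trans. apply cone_slice_widen. unfold inT; lra.
    rewrite Rabs_right by lra. lra.
  - eapply Rle_trans. apply (Int_abs_le_const _ _ _ (2 * d * Wt (t + d))).
    apply (ex_Int_cone_slice T); auto; lra.
    + intros tau Htau. rewrite Rmin_left, Rmax_right in Htau by lra.
      eapply Rle_trans. apply cone_slice_bound; lra.
      apply Rmult_le_compat. nra. apply weight_nonneg; auto. lra. apply weight_mono; lra.
    + replace (t + d - t) with d by ring. rewrite Rabs_right by lra. lra.
Qed.

End ConeIntegral.

Lemma scal_opp_one (z : R) : scal (-1) z = - z.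
Proof. unfold scal. simpl. unfold mult. simpl. ring. Qed.

(* Estimates for char_int when h vanishes at t = 0 and its time derivative k is dominated
   by an exponential weight: then |h(y, t)| <= Kp t - Kp 0 with Kp the primitive of the weight. *)
Section CharIntegral.
Variables (T A B l : R) (h k : R -> R -> R).
Hypothesis Hc : cont2 T h.
Hypothesis HA : 0 <= A.
Hypothesis HB : 0 <= B.
Hypothesis Hl : 0 < l.
Hypothesis H0 : forall y, h y 0 = 0.
Hypothesis Hk : forall y tau, inT T tau -> deriv_within (inT T) (fun s => h y s) tau (k y tau).
Hypothesis Hkb : forall y tau, inT T tau -> Rabs (k y tau) <= weight A B l tau.

Let Kp := weight_prim A B l.

Lemma Kp_mono s1 s2 : s1 <= s2 -> Kp s1 <= Kp s2.
Proof. intros. apply weight_prim_mono; auto. Qed.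

Lemma h_incr y t1 t2 : 0 <= t1 -> t1 <= t2 -> t2 <= T -> Rabs (h y t2 - h y t1) <= Kp t2 - Kp t1.
Proof.
  intros. apply (deriv_within_dominated T (fun s => h y s) (fun s => k y s) Kp (weight A B l)); auto.
  - intros s Hs. apply Hk. unfold inT; lra.
  - intros s. apply weight_prim_deriv; auto.
  - intros s Hs. apply Hkb. unfold inT; lra.
Qed.

Lemma h_bound y s t : 0 <= s <= t -> t <= T -> Rabs (h y s) <= Kp t - Kp 0.
Proof.
  intros. replace (h y s) with (h y s - h y 0) by (rewrite H0; ring).
  eapply Rle_trans. apply h_incr; lra. pose proof (Kp_mono s t). lra.
Qed.

Definition diag_int a b := Int (fun y => h y (b - y)) a b.

Lemma ex_Int_diag c a b : a <= b -> (forall y, a <= y <= b -> 0 <= c - y <= T) ->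
  ex_RInt (fun y => h y (c - y)) a b.
Proof.
  intros Hab Hin. apply ex_RInt_ext with (f := fun s => h (0 + 1 * s) (c + -1 * s)).
  { intros x _. f_equal; ring. }
  apply (ex_Int_segment T); auto. intros s Hs. specialize (Hin s Hs). unfold inT; lra.
Qed.

(* The right characteristic integral, rewritten in the space variable y = x + t - tau. *)
Lemma char_int_diag x t : 0 <= t <= T -> char_int h x t = diag_int x (x + t).
Proof.
  intros Ht. unfold char_int, diag_int.
  assert (Ex : ex_RInt (fun y => h y (x + t - y)) (-1 * 0 + (x + t)) (-1 * t + (x + t))).
  { replace (-1 * 0 + (x + t)) with (x + t) by ring. replace (-1 * t + (x + t)) with x by ring.
    apply ex_Int_swap. apply ex_Int_diag. lra. intros; lra. }
  pose proof (RInt_comp_lin (V:=R_CompleteNormedModule) (fun y => h y (x + t - y)) (-1) (x + t) 0 t Ex) as E.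
  replace (-1 * 0 + (x + t)) with (x + t) in E by ring. replace (-1 * t + (x + t)) with x in E by ring.
  rewrite (RInt_ext _ (fun tau => - h (x + (t - tau)) tau)) in E.
  2:{ intros z _. rewrite scal_opp_one. f_equal. f_equal; ring. }
  rewrite Int_opp in E by (apply (ex_Int_char T); auto; lra).
  rewrite (Int_swap (fun y => h y (x + t - y)) x (x + t)) in E by (apply ex_Int_diag; [lra| intros; lra]).
  replace (x + t - x) with t by ring. lra.
Qed.

Lemma diag_int_left a b eta : 0 < eta -> a + eta <= b -> b - a <= T ->
  Rabs (diag_int (a + eta) b - diag_int a b) <= eta * (Kp (b - a) - Kp 0).
Proof.
  intros He Hab HT. unfold diag_int.
  rewrite <- (Int_Chasles _ a (a + eta) b) by (apply ex_Int_diag; [lra| intros; lra]).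
  match goal with |- Rabs (?u - (?v + ?u)) <= _ => replace (u - (v + u)) with (- v) by ring end.
  rewrite Rabs_Ropp. eapply Rle_trans. apply (Int_abs_le_const _ _ _ (Kp (b - a) - Kp 0)).
  apply ex_Int_diag; [lra| intros; lra].
  - intros y Hy. rewrite Rmin_left, Rmax_right in Hy by lra. apply h_bound; lra.
  - replace (a + eta - a) with eta by ring. rewrite Rabs_right by lra. lra.
Qed.

(* Moving the right end by d shifts the whole diagonal in time by d, plus a new piece. *)
Lemma diag_int_right a b d : 0 < d -> a <= b -> b + d - a <= T ->
  Rabs (diag_int a (b + d) - diag_int a b) <= d * (Kp (b + d - a) - Kp 0).
Proof.
  intros Hd Hab HT. unfold diag_int.
  rewrite <- (Int_Chasles _ a b (b + d)) by (apply ex_Int_diag; [lra| intros; lra]).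
  match goal with |- Rabs (?u + ?w - ?v) <= _ => replace (u + w - v) with ((u - v) + w) by ring end.
  rewrite <- Int_minus by (apply ex_Int_diag; [lra| intros; lra]).
  eapply Rle_trans. apply Rabs_triang.
  assert (Shifted : Rabs (Int (fun y => h y (b + d - y) - h y (b - y)) a b) <= d * (Kp (b + d - a) - Kp d)).
  { eapply Rle_trans.
    apply (Int_abs_le _ (fun y => d * A + d * B * exp (l * (-1 * y + (b + d))))); auto.
    - apply ex_Int_minus; apply ex_Int_diag; try lra; intros; lra.
    - apply ex_Int_continuous. intros; apply affine_exp_cont.
    - intros y Hy. replace (b + d - y) with ((b - y) + d) by ring.
      eapply Rle_trans. apply h_incr; lra. unfold Kp. eapply Rle_trans. apply weight_prim_incr; lra.
      unfold weight. replace (l * (b - y + d)) with (l * (-1 * y + (b + d))) by ring. lra.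
    - rewrite Int_affine_exp by lra. unfold Kp, weight_prim.
      replace (-1 * b + (b + d)) with d by ring. replace (-1 * a + (b + d)) with (b + d - a) by ring.
      apply Req_le. field. lra. }
  assert (NewPiece : Rabs (Int (fun y => h y (b + d - y)) b (b + d)) <= d * (Kp d - Kp 0)).
  { eapply Rle_trans. apply (Int_abs_le_const _ _ _ (Kp d - Kp 0)). apply ex_Int_diag; [lra| intros; lra].
    - intros y Hy. rewrite Rmin_left, Rmax_right in Hy by lra. apply h_bound; lra.
    - replace (b + d - b) with d by ring. rewrite Rabs_right by lra. lra. }
  lra.
Qed.

Lemma char_int_bound x t : 0 <= t <= T -> Rabs (char_int h x t) <= t * (Kp t - Kp 0).
Proof.
  intros Ht. unfold char_int. eapply Rle_trans.
  apply (Int_abs_le_const _ _ _ (Kp t - Kp 0)). apply (ex_Int_char T); auto; lra.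
  - intros tau Htau. rewrite Rmin_left, Rmax_right in Htau by lra. apply h_bound; lra.
  - rewrite Rminus_0_r, Rabs_right by lra. lra.
Qed.

Lemma char_int_shift x t eta : 0 < eta -> eta < t -> t <= T ->
  Rabs (char_int h (x + eta) t - char_int h x t) <= eta * (2 * (Kp t - Kp 0)).
Proof.
  intros. rewrite !char_int_diag by lra.
  replace (x + eta + t) with ((x + t) + eta) by ring.
  match goal with |- Rabs (?u - ?v) <= _ =>
    replace (u - v) with ((u - diag_int (x + eta) (x + t)) + (diag_int (x + eta) (x + t) - v)) by ring end.
  eapply Rle_trans. apply Rabs_triang.
  pose proof (diag_int_right (x + eta) (x + t) eta ltac:(lra) ltac:(lra) ltac:(lra)) as Q1.
  pose proof (diag_int_left x (x + t) eta ltac:(lra) ltac:(lra) ltac:(lra)) as Q2.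
  replace (x + t + eta - (x + eta)) with t in Q1 by ring.
  replace (x + t - x) with t in Q2 by ring. lra.
Qed.

Lemma char_int_time x t d : 0 <= t -> 0 < d -> t + d <= T ->
  Rabs (char_int h x (t + d) - char_int h x t) <= d * (Kp (t + d) - Kp 0).
Proof.
  intros. rewrite !char_int_diag by lra. replace (x + (t + d)) with ((x + t) + d) by ring.
  eapply Rle_trans. apply diag_int_right; lra. replace (x + t + d - x) with (t + d) by ring. lra.
Qed.

End CharIntegral.

Lemma M0_lub (f : R -> R -> R) T : 0 <= T -> bnd T f ->
  is_lub (fun r => exists x t, inT T t /\ r = Rabs (f x t)) (M0 f T).
Proof.
  intros HT [Bd HB]. unfold M0. apply epsilon_spec.
  destruct (completeness (fun r => exists x t, inT T t /\ r = Rabs (f x t))) as [m Hm].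
  - exists Bd. intros r [x [t [Ht ->]]]. apply HB; auto.
  - exists (Rabs (f 0 0)). exists 0, 0. split; auto. unfold inT; lra.
  - exists m. exact Hm.
Qed.

Lemma M0_ub (f : R -> R -> R) T x t : 0 <= T -> bnd T f -> inT T t -> Rabs (f x t) <= M0 f T.
Proof. intros HT Hb Ht. destruct (M0_lub f T HT Hb) as [Hu _]. apply Hu. exists x, t. auto. Qed.

Lemma M0_le (f : R -> R -> R) T Bd : 0 <= T ->
  (forall x t, inT T t -> Rabs (f x t) <= Bd) -> M0 f T <= Bd.
Proof.
  intros HT H. destruct (M0_lub f T HT (ex_intro _ Bd H)) as [_ Hl].
  apply Hl. intros r [x [t [Ht ->]]]. auto.
Qed.

(* The exponent of the weight and the constant of the theorem:
   C(T, K) = 6 (T + 3) (2 + K) e^(lam T), lam = 2 (T + 3) (2K + K^2) + 1,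
   with T and K replaced by their positive parts so that C is positive and monotone. *)
Definition lamf (T K : R) := 2 * (T + 3) * (2 * K + K * K) + 1.
Definition Cfun (T K : R) :=
  6 * (Rmax T 0 + 3) * (2 + Rmax K 0) * exp (lamf (Rmax T 0) (Rmax K 0) * Rmax T 0).

Lemma Cfun_pos T K : 0 < Cfun T K.
Proof.
  unfold Cfun. pose proof (Rmax_r T 0). pose proof (Rmax_r K 0).
  pose proof (exp_pos (lamf (Rmax T 0) (Rmax K 0) * Rmax T 0)).
  apply Rmult_lt_0_compat; auto. apply Rmult_lt_0_compat; lra.
Qed.

Lemma Cfun_mono T T' K K' : T <= T' -> K <= K' -> Cfun T K <= Cfun T' K'.
Proof.
  intros HT HK. unfold Cfun.
  pose proof (Rle_max_compat_r T T' 0 HT). pose proof (Rle_max_compat_r K K' 0 HK).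
  pose proof (Rmax_r T 0). pose proof (Rmax_r K 0).
  set (t := Rmax T 0) in *. set (t' := Rmax T' 0) in *. set (k := Rmax K 0) in *. set (k' := Rmax K' 0) in *.
  assert (Hl : lamf t k * t <= lamf t' k' * t').
  { unfold lamf. assert (2 * k + k * k <= 2 * k' + k' * k') by nra.
    assert (0 <= 2 * k + k * k) by nra.
    assert ((t + 3) * (2 * k + k * k) <= (t' + 3) * (2 * k' + k' * k')) by nra.
    assert (0 <= 2 * (t + 3) * (2 * k + k * k) + 1) by nra. nra. }
  apply exp_mono in Hl. pose proof (exp_pos (lamf t k * t)).
  apply Rmult_le_compat; try nra.
Qed.

Lemma M1_le_pointwise (u ux ut : R -> R -> R) T K x t : 0 <= T -> M1_le u ux ut T K -> inT T t ->
  Rabs (u x t) + Rabs (ux x t) + Rabs (ut x t) <= K.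
Proof.
  intros HT [B1 [B2 [B3 HM]]] Ht. unfold M1 in HM.
  pose proof (M0_ub u T x t HT B1 Ht). pose proof (M0_ub ux T x t HT B2 Ht).
  pose proof (M0_ub ut T x t HT B3 Ht). lra.
Qed.

Lemma deriv_within_Hop T (H Ht Hu Htu Huu : R -> R -> R -> R) (u ux ut : R -> R -> R) y tau :
  regH T H Ht Hu Htu Huu -> isC1 T u ux ut -> inT T tau ->
  deriv_within (inT T) (fun s => H y s (u y s)) tau (Ht y tau (u y tau) + Hu y tau (u y tau) * ut y tau).
Proof.
  intros [_ [_ [cHu [_ [_ [_ D]]]]]] [_ [_ [_ Du]]] Htau.
  apply (deriv_within_chain T (fun s v => H y s v) (fun s v => Ht y s v) (fun s v => Hu y s v)
           (fun s => u y s) (fun s => ut y s) tau Htau).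
  - intros v. apply (D y tau v Htau).
  - intros s v Hs. apply (D y s v Hs).
  - intros e He. destruct (cHu y tau (u y tau) Htau e He) as [d [Hd Q]].
    exists d. split; auto. intros s v Hs Hst Hv. apply Q; auto. rewrite Rminus_diag, Rabs_R0; auto.
  - apply (Du y tau Htau).
Qed.

Lemma abs_half_combo (p q r : R) : Rabs (/ 2 * p + / 2 * q - / 2 * r) <= / 2 * Rabs p + / 2 * Rabs q + / 2 * Rabs r.
Proof.
  replace (/ 2 * p + / 2 * q - / 2 * r) with (/ 2 * (p + q + - r)) by ring.
  rewrite Rabs_mult, Rabs_right by lra.
  pose proof (Rabs_triang (p + q) (- r)). pose proof (Rabs_triang p q). rewrite Rabs_Ropp in H. lra.
Qed.

Section MainEstimate.
Variables (T K eps : R)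
      (F1 F1u F1p F1q F2 F2u F2p F2q : R -> R -> R -> R -> R -> R)
      (H1 H1t H1u H1tu H1uu H2 H2t H2u H2tu H2uu : R -> R -> R -> R)
      (a b : R -> R)
      (u1 u1x u1t u2 u2x u2t : R -> R -> R).
Hypothesis HT : 0 < T.
Hypothesis rF1 : regF T F1 F1u F1p F1q.
Hypothesis rF2 : regF T F2 F2u F2p F2q.
Hypothesis rH1 : regH T H1 H1t H1u H1tu H1uu.
Hypothesis rH2 : regH T H2 H2t H2u H2tu H2uu.
Hypothesis C1 : isC1 T u1 u1x u1t.
Hypothesis C2 : isC1 T u2 u2x u2t.
Hypothesis E1 : forall x t, inT T t -> u1 x t = Iop a b (Fop F1 u1 u1x u1t) (Hop H1 u1) x t.
Hypothesis E2 : forall x t, inT T t -> u2 x t = Iop a b (Fop F2 u2 u2x u2t) (Hop H2 u2) x t.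
Hypothesis Mb1 : M1_le u1 u1x u1t T K.
Hypothesis Mb2 : M1_le u2 u2x u2t T K.
Hypothesis H0 : forall x u, H1 x 0 u = H2 x 0 u.
Hypothesis BF : forall x t u p q, inS5 T K x t u p q ->
       Rabs (F1u x t u p q) <= K /\ Rabs (F1p x t u p q) <= K /\ Rabs (F1q x t u p q) <= K.
Hypothesis BH : forall x t u, inS3 T K x t u ->
       Rabs (H1u x t u) <= K /\ Rabs (H1tu x t u) <= K /\ Rabs (H1uu x t u) <= K.
Hypothesis DF : forall x t u p q, inS5 T K x t u p q -> Rabs (F2 x t u p q - F1 x t u p q) <= eps.
Hypothesis DH : forall x t u, inS3 T K x t u ->
       Rabs (H2 x t u - H1 x t u) <= eps /\ Rabs (H2t x t u - H1t x t u) <= eps /\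
       Rabs (H2u x t u - H1u x t u) <= eps.

Lemma bound1 x t : inT T t -> Rabs (u1 x t) + Rabs (u1x x t) + Rabs (u1t x t) <= K.
Proof. apply M1_le_pointwise; auto; lra. Qed.
Lemma bound2 x t : inT T t -> Rabs (u2 x t) + Rabs (u2x x t) + Rabs (u2t x t) <= K.
Proof. apply M1_le_pointwise; auto; lra. Qed.

Lemma K_nonneg : 0 <= K.
Proof.
  pose proof (bound1 0 0 ltac:(unfold inT; lra)).
  pose proof (Rabs_pos (u1 0 0)). pose proof (Rabs_pos (u1x 0 0)). pose proof (Rabs_pos (u1t 0 0)). lra.
Qed.

Lemma eps_nonneg : 0 <= eps.
Proof.
  eapply Rle_trans. apply Rabs_pos. apply (DF 0 0 0 0 0). split. unfold inT; lra.
  rewrite Rabs_R0. pose proof K_nonneg. lra.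
Qed.

Let f := fun y tau => Fop F2 u2 u2x u2t y tau - Fop F1 u1 u1x u1t y tau.
Let h := fun y tau => Hop H2 u2 y tau - Hop H1 u1 y tau.
Let ht := fun y tau => h (- y) tau.
Let k := fun y tau => (H2t y tau (u2 y tau) + H2u y tau (u2 y tau) * u2t y tau)
                    - (H1t y tau (u1 y tau) + H1u y tau (u1 y tau) * u1t y tau).
Let kt := fun y tau => k (- y) tau.
Let w := diff2 u2 u1.
Let wx := diff2 u2x u1x.
Let wt := diff2 u2t u1t.
Let m := fun y tau => Rabs (w y tau) + Rabs (wx y tau) + Rabs (wt y tau).

Lemma cont_F1 : cont2 T (Fop F1 u1 u1x u1t).
Proof. destruct rF1 as [c _]. destruct C1 as [c1 [c2 [c3 _]]]. apply cont2_Fop; auto. Qed.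
Lemma cont_F2 : cont2 T (Fop F2 u2 u2x u2t).
Proof. destruct rF2 as [c _]. destruct C2 as [c1 [c2 [c3 _]]]. apply cont2_Fop; auto. Qed.
Lemma cont_H1 : cont2 T (Hop H1 u1).
Proof. destruct rH1 as [c _]. destruct C1 as [c1 _]. apply cont2_Hop; auto. Qed.
Lemma cont_H2 : cont2 T (Hop H2 u2).
Proof. destruct rH2 as [c _]. destruct C2 as [c1 _]. apply cont2_Hop; auto. Qed.

Lemma cont_f : cont2 T f.
Proof. apply cont2_minus. apply cont_F2. apply cont_F1. Qed.
Lemma cont_h : cont2 T h.
Proof. apply cont2_minus. apply cont_H2. apply cont_H1. Qed.
Lemma cont_ht : cont2 T ht.
Proof. apply cont2_reflect. apply cont_h. Qed.

(* The representation of w: the terms in a and b cancel. *)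
Lemma w_repr x t : inT T t -> w x t = / 2 * cone_int f x t + / 2 * (char_int h x t - char_int ht (- x) t).
Proof.
  intros Ht. unfold w, diff2. rewrite E1, E2 by auto.
  rewrite (Iop_expand T _ _ _ _ x t cont_F2 cont_H2 Ht), (Iop_expand T _ _ _ _ x t cont_F1 cont_H1 Ht).
  pose proof (cone_int_minus T _ _ x t cont_F1 cont_F2 Ht) as Q1.
  pose proof (char_int_minus T _ _ x t cont_H1 cont_H2 Ht) as Q2.
  pose proof (char_int_left_minus T _ _ x t cont_H1 cont_H2 Ht) as Q3.
  rewrite (char_int_left_reflect (fun y tau => Hop H2 u2 y tau - Hop H1 u1 y tau)) in Q3.
  cbv beta in Q3. unfold f, ht, h. lra.
Qed.

(* Both solutions have the same initial value, so h vanishes at t = 0; k is the time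
   derivative of h. *)
Lemma w_init y : w y 0 = 0.
Proof. rewrite w_repr by (unfold inT; lra). unfold cone_int, char_int. rewrite !Int_point. ring. Qed.

Lemma h_init y : h y 0 = 0.
Proof.
  pose proof (w_init y) as Hw. unfold w, diff2 in Hw.
  unfold h, Hop. replace (u2 y 0) with (u1 y 0) by lra. rewrite H0. ring.
Qed.

Lemma ht_init y : ht y 0 = 0.
Proof. apply h_init. Qed.

Lemma h_deriv y tau : inT T tau -> deriv_within (inT T) (fun s => h y s) tau (k y tau).
Proof.
  intros Ht. unfold h, Hop, k. apply deriv_within_minus.
  apply (deriv_within_Hop T H2 H2t H2u H2tu H2uu u2 u2x u2t); auto.
  apply (deriv_within_Hop T H1 H1t H1u H1tu H1uu u1 u1x u1t); auto.
Qed.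

Lemma ht_deriv y tau : inT T tau -> deriv_within (inT T) (fun s => ht y s) tau (kt y tau).
Proof. apply h_deriv. Qed.

(* |f| <= eps + K m: split F2(u2) - F1(u1) = (F2 - F1)(u2) + (F1(u2) - F1(u1)). *)
Lemma f_bound y tau : inT T tau -> Rabs (f y tau) <= eps + K * m y tau.
Proof.
  intros Ht. unfold f, Fop, m, w, wx, wt, diff2.
  pose proof (bound1 y tau Ht). pose proof (bound2 y tau Ht).
  destruct rF1 as [_ [_ [_ [_ [_ D]]]]].
  match goal with |- Rabs (?A - ?B) <= _ =>
    replace (A - B) with ((A - F1 y tau (u2 y tau) (u2x y tau) (u2t y tau))
                          + (F1 y tau (u2 y tau) (u2x y tau) (u2t y tau) - B)) by ring end.
  eapply Rle_trans. apply Rabs_triang. apply Rplus_le_compat.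
  - apply DF. split; auto.
  - apply (lipschitz3 (fun u p q => F1 y tau u p q) (fun u p q => F1u y tau u p q)
      (fun u p q => F1p y tau u p q) (fun u p q => F1q y tau u p q) K K); auto;
      try (intros; apply (D y tau u p q Ht)).
    intros u p q Hs. apply BF. split; auto.
Qed.

Lemma H1_lipschitz y tau v1 v2 : inT T tau -> Rabs v1 <= K -> Rabs v2 <= K ->
  Rabs (H1t y tau v2 - H1t y tau v1) <= K * Rabs (v2 - v1) /\
  Rabs (H1u y tau v2 - H1u y tau v1) <= K * Rabs (v2 - v1).
Proof.
  intros Ht Hv1 Hv2. destruct rH1 as [_ [_ [_ [_ [_ [_ D]]]]]].
  split; [apply (mvt_lipschitz (fun v => H1t y tau v) (fun v => H1tu y tau v))
         |apply (mvt_lipschitz (fun v => H1u y tau v) (fun v => H1uu y tau v))];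
  try (intros v _; apply (D y tau v Ht));
  intros v Hv; apply BH; split; auto; apply (abs_between _ _ _ K Hv); lra.
Qed.

Lemma abs_sum5 a1 a2 a3 a4 a5 :
  Rabs (a1 + a2 + a3 + a4 + a5) <= Rabs a1 + Rabs a2 + Rabs a3 + Rabs a4 + Rabs a5.
Proof. repeat (eapply Rle_trans; [apply Rabs_triang|]; apply Rplus_le_compat_r). lra. Qed.

(* |k| <= (1 + K) eps + (K + K^2) m, splitting k into five terms: the perturbation of Ht, the
   variation of H1t in u, the perturbation of Hu, the variation of H1u, and H1u times w_t. *)
Lemma k_bound y tau : inT T tau -> Rabs (k y tau) <= (1 + K) * eps + (K + K * K) * m y tau.
Proof.
  intros Ht. unfold k, m, w, wx, wt, diff2.
  pose proof (bound1 y tau Ht). pose proof (bound2 y tau Ht).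
  pose proof K_nonneg. pose proof eps_nonneg.
  pose proof (Rabs_pos (u1 y tau)). pose proof (Rabs_pos (u1x y tau)). pose proof (Rabs_pos (u1t y tau)).
  pose proof (Rabs_pos (u2 y tau)). pose proof (Rabs_pos (u2x y tau)). pose proof (Rabs_pos (u2t y tau)).
  set (v1 := u1 y tau) in *. set (v2 := u2 y tau) in *.
  set (p := u2t y tau) in *. set (q := u1t y tau) in *.
  destruct (DH y tau v2 ltac:(split; auto; lra)) as [_ [Dt Du]].
  destruct (BH y tau v1 ltac:(split; auto; lra)) as [Bu1 _].
  destruct (H1_lipschitz y tau v1 v2 Ht ltac:(lra) ltac:(lra)) as [Lt Lu].
  replace (H2t y tau v2 + H2u y tau v2 * p - (H1t y tau v1 + H1u y tau v1 * q)) with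
    ((H2t y tau v2 - H1t y tau v2) + (H1t y tau v2 - H1t y tau v1)
     + (H2u y tau v2 - H1u y tau v2) * p + (H1u y tau v2 - H1u y tau v1) * p
     + H1u y tau v1 * (p - q)) by ring.
  eapply Rle_trans. apply abs_sum5. rewrite !Rabs_mult.
  assert (Hp : Rabs p <= K) by lra.
  pose proof (Rabs_pos (p - q)). pose proof (Rabs_pos (v2 - v1)).
  pose proof (Rabs_pos (u2x y tau - u1x y tau)).
  assert (A3 : Rabs (H2u y tau v2 - H1u y tau v2) * Rabs p <= eps * K)
    by (apply Rmult_le_compat; auto using Rabs_pos).
  assert (A4 : Rabs (H1u y tau v2 - H1u y tau v1) * Rabs p <= K * K * Rabs (v2 - v1)).
  { apply Rle_trans with (K * Rabs (v2 - v1) * K). apply Rmult_le_compat; auto using Rabs_pos. lra. }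
  assert (A5 : Rabs (H1u y tau v1) * Rabs (p - q) <= K * Rabs (p - q))
    by (apply Rmult_le_compat; auto using Rabs_pos; lra).
  assert (0 <= K * K * Rabs (p - q)) by (apply Rmult_le_pos; nra).
  assert (0 <= (K + K * K) * Rabs (u2x y tau - u1x y tau)) by (apply Rmult_le_pos; nra).
  nra.
Qed.

Let lam := lamf T K.

Lemma lam_pos : 0 < lam.
Proof. unfold lam, lamf. pose proof K_nonneg. nra. Qed.

Lemma w_diff x t x' t' : inT T t -> inT T t' ->
  Rabs (w x' t' - w x t) <= / 2 * Rabs (cone_int f x' t' - cone_int f x t)
    + / 2 * Rabs (char_int h x' t' - char_int h x t)
    + / 2 * Rabs (char_int ht (- x') t' - char_int ht (- x) t).
Proof.
  intros Ht Ht'. rewrite !w_repr by auto.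
  replace (/ 2 * cone_int f x' t' + / 2 * (char_int h x' t' - char_int ht (- x') t') -
           (/ 2 * cone_int f x t + / 2 * (char_int h x t - char_int ht (- x) t)))
    with (/ 2 * (cone_int f x' t' - cone_int f x t) + / 2 * (char_int h x' t' - char_int h x t)
          - / 2 * (char_int ht (- x') t' - char_int ht (- x) t)) by ring.
  apply abs_half_combo.
Qed.

(* One step of the weighted-sup argument: if m <= N e^(lam tau) on the strip, then f and k
   are dominated by exponential weights, and w, w_x, w_t are bounded accordingly. *)
Section WeightedStep.
Variable N : R.
Hypothesis HN0 : 0 <= N.
Hypothesis HN : forall y tau, inT T tau -> m y tau <= N * exp (lam * tau).

Let Af := eps.
Let Bf := K * N.
Let Ah := (1 + K) * eps.
Let Bh := (K + K * K) * N.
Let Lf := weight_prim Af Bf lam.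
Let Kh := weight_prim Ah Bh lam.

Lemma Af_nonneg : 0 <= Af.
Proof. apply eps_nonneg. Qed.
Lemma Bf_nonneg : 0 <= Bf.
Proof. pose proof K_nonneg. unfold Bf. nra. Qed.
Lemma Ah_nonneg : 0 <= Ah.
Proof. pose proof K_nonneg. pose proof eps_nonneg. unfold Ah. nra. Qed.
Lemma Bh_nonneg : 0 <= Bh.
Proof. pose proof K_nonneg. unfold Bh. nra. Qed.

Lemma f_weight y tau : inT T tau -> Rabs (f y tau) <= weight Af Bf lam tau.
Proof.
  intros Ht. eapply Rle_trans. apply f_bound; auto. unfold weight, Af, Bf.
  pose proof (HN y tau Ht). pose proof K_nonneg.
  assert (K * m y tau <= K * (N * exp (lam * tau))) by (apply Rmult_le_compat_l; auto). lra.
Qed.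

Lemma k_weight y tau : inT T tau -> Rabs (k y tau) <= weight Ah Bh lam tau.
Proof.
  intros Ht. eapply Rle_trans. apply k_bound; auto. unfold weight, Ah, Bh.
  pose proof (HN y tau Ht). pose proof K_nonneg. assert (0 <= K + K * K) by nra.
  assert ((K + K * K) * m y tau <= (K + K * K) * (N * exp (lam * tau))) by (apply Rmult_le_compat_l; auto).
  lra.
Qed.

Lemma kt_weight y tau : inT T tau -> Rabs (kt y tau) <= weight Ah Bh lam tau.
Proof. apply k_weight. Qed.

Let cone_bound := cone_int_bound T Af Bf lam f cont_f
      Af_nonneg Bf_nonneg lam_pos f_weight.
Let cone_shift := cone_int_shift T Af Bf lam f cont_f lam_pos f_weight.
Let cone_time := cone_int_time T Af Bf lam f cont_f
      Af_nonneg Bf_nonneg lam_pos f_weight.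
Let char_bound := char_int_bound T Ah Bh lam h k cont_h Ah_nonneg Bh_nonneg lam_pos h_init h_deriv k_weight.
Let char_bound_t := char_int_bound T Ah Bh lam ht kt cont_ht Ah_nonneg Bh_nonneg lam_pos ht_init ht_deriv kt_weight.
Let char_shift := char_int_shift T Ah Bh lam h k cont_h Ah_nonneg Bh_nonneg lam_pos h_init h_deriv k_weight.
Let char_shift_t := char_int_shift T Ah Bh lam ht kt cont_ht Ah_nonneg Bh_nonneg lam_pos ht_init ht_deriv kt_weight.
Let char_time := char_int_time T Ah Bh lam h k cont_h Ah_nonneg Bh_nonneg lam_pos h_init h_deriv k_weight.
Let char_time_t := char_int_time T Ah Bh lam ht kt cont_ht Ah_nonneg Bh_nonneg lam_pos ht_init ht_deriv kt_weight.

Lemma Lf_mono s1 s2 : s1 <= s2 -> Lf s1 <= Lf s2.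
Proof. intros. apply weight_prim_mono; auto using Af_nonneg, Bf_nonneg, lam_pos. Qed.
Lemma Kh_mono s1 s2 : s1 <= s2 -> Kh s1 <= Kh s2.
Proof. intros. apply weight_prim_mono; auto using Ah_nonneg, Bh_nonneg, lam_pos. Qed.

Lemma w_bound x t : inT T t -> Rabs (w x t) <= t * ((Lf t - Lf 0) + (Kh t - Kh 0)).
Proof.
  intros Ht. replace (w x t) with (w x t - w x 0) by (rewrite w_init; ring).
  eapply Rle_trans. apply w_diff; auto. unfold inT in *; lra.
  assert (Z : forall g y, cone_int g y 0 = 0 /\ char_int g y 0 = 0)
    by (intros; unfold cone_int, char_int; rewrite !Int_point; auto).
  rewrite (proj1 (Z f x)), (proj2 (Z h x)), (proj2 (Z ht (- x))), !Rminus_0_r.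
  pose proof (cone_bound x t Ht) as Q1. pose proof (char_bound x t Ht) as Q2.
  pose proof (char_bound_t (- x) t Ht) as Q3. fold Lf Kh in Q1, Q2, Q3. lra.
Qed.

Lemma w_space_incr x t eta : 0 < eta < t -> t <= T ->
  Rabs (w (x + eta) t - w x t) <= eta * ((Lf t - Lf 0) + 2 * (Kh t - Kh 0)).
Proof.
  intros He Ht. assert (Htin : inT T t) by (unfold inT; lra).
  eapply Rle_trans. apply w_diff; auto.
  pose proof (cone_shift x t eta Htin) as Q1.
  pose proof (char_shift x t eta (proj1 He) (proj2 He) Ht) as Q2.
  pose proof (char_shift_t (- x - eta) t eta (proj1 He) (proj2 He) Ht) as Q3.
  replace (- x - eta + eta) with (- x) in Q3 by ring. replace (- (x + eta)) with (- x - eta) by ring.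
  rewrite Rabs_minus_sym in Q3. rewrite (Rabs_right eta) in Q1 by lra.
  fold Lf Kh in Q1, Q2, Q3. lra.
Qed.

Lemma w_time_forward x t d : 0 <= t -> 0 < d -> t + d <= T ->
  Rabs (w x (t + d) - w x t) <= d * ((Lf t - Lf 0) + d * weight Af Bf lam (t + d) + (Kh (t + d) - Kh 0)).
Proof.
  intros Ht Hd HtT. eapply Rle_trans. apply w_diff; unfold inT; lra.
  pose proof (cone_time x t d Ht Hd HtT) as Q1. pose proof (char_time x t d Ht Hd HtT) as Q2.
  pose proof (char_time_t (- x) t d Ht Hd HtT) as Q3. fold Lf Kh in Q1, Q2, Q3. lra.
Qed.

Lemma Lf_gain t : 0 <= t -> 0 <= Lf t - Lf 0.
Proof. intros. pose proof (Lf_mono 0 t). lra. Qed.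
Lemma Kh_gain t : 0 <= t -> 0 <= Kh t - Kh 0.
Proof. intros. pose proof (Kh_mono 0 t). lra. Qed.

(* Passing to the limit in the spatial increments bounds w_x. *)
Lemma wx_bound x t : inT T t -> Rabs (wx x t) <= (Lf t - Lf 0) + 2 * (Kh t - Kh 0).
Proof.
  intros Ht. pose proof (Lf_gain t (proj1 Ht)). pose proof (Kh_gain t (proj1 Ht)).
  apply (deriv_abs_le_of_increments (fun y => w y t) x (wx x t) (fun _ => (Lf t - Lf 0) + 2 * (Kh t - Kh 0))).
  - unfold w, wx, diff2. destruct C1 as [_ [_ [_ D1]]]. destruct C2 as [_ [_ [_ D2]]].
    apply (derivable_pt_lim_minus (fun y => u2 y t) (fun y => u1 y t)).
    apply (D2 x t Ht). apply (D1 x t Ht).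
  - destruct (Req_dec t 0) as [Ht0|Ht0].
    + exists 1. split. lra. intros eta Heta. subst t. rewrite !w_init, Rminus_diag, Rabs_R0.
      apply Rmult_le_pos; lra.
    + exists t. split. unfold inT in Ht. lra. intros eta He.
      apply w_space_incr; auto. apply Ht.
  - apply continuity_pt_const. intros ? ?; reflexivity.
Qed.

(* For w_t the increment bound must be continuous in the step size s; it is
   gb s = (Lf (t + s) - Lf 0) + s * weight (t + s) + (Kh (t + s) - Kh 0). *)
Lemma wt_bound x t : inT T t -> Rabs (wt x t) <= (Lf t - Lf 0) + (Kh t - Kh 0).
Proof.
  intros Ht.
  set (gb := fun s => (Lf (t + s) - Lf 0) + s * weight Af Bf lam (t + s) + (Kh (t + s) - Kh 0)).
  replace ((Lf t - Lf 0) + (Kh t - Kh 0)) with (gb 0) by (unfold gb; rewrite Rplus_0_r; ring).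
  assert (phM : forall s1 s2, s1 <= s2 -> weight Af Bf lam s1 <= weight Af Bf lam s2).
  { intros. apply weight_mono; auto using Bf_nonneg, lam_pos. }
  apply (deriv_within_abs_le_of_increments T (fun s => w x s) t (wt x t) gb HT Ht).
  - unfold w, wt, diff2. destruct C1 as [_ [_ [_ D1]]]. destruct C2 as [_ [_ [_ D2]]].
    apply (deriv_within_minus (inT T) (fun s => u2 x s) (fun s => u1 x s)).
    apply (D2 x t Ht). apply (D1 x t Ht).
  - exists 1. split. lra. intros d Hd _ Hin. unfold inT in Ht, Hin. unfold gb.
    destruct (Rle_dec 0 d) as [Hdp|Hdn].
    + rewrite (Rabs_right d) by lra.
      eapply Rle_trans. apply w_time_forward; lra.
      assert (d * (Lf t - Lf 0) <= d * (Lf (t + d) - Lf 0)) by (apply Rmult_le_compat_l; pose proof (Lf_mono t (t + d)); lra).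
      lra.
    + set (s := - d). assert (Hsd : d = - s) by (unfold s; ring). clearbody s. subst d.
      replace (Rabs (- s)) with s by (rewrite Rabs_left; lra).
      pose proof (w_time_forward x (t + - s) s ltac:(lra) ltac:(lra) ltac:(lra)) as Q.
      replace (t + - s + s) with t in Q by ring. rewrite Rabs_minus_sym in Q.
      assert (s * (Lf (t + - s) - Lf 0) <= s * (Lf (t + s) - Lf 0))
        by (apply Rmult_le_compat_l; pose proof (Lf_mono (t + - s) (t + s)); lra).
      assert (s * (Kh t - Kh 0) <= s * (Kh (t + s) - Kh 0))
        by (apply Rmult_le_compat_l; pose proof (Kh_mono t (t + s)); lra).
      assert (s * (s * weight Af Bf lam t) <= s * (s * weight Af Bf lam (t + s)))
        by (apply Rmult_le_compat_l; [lra|]; apply Rmult_le_compat_l; [lra|]; apply phM; lra).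
      lra.
  - unfold gb. assert (Hshift : continuity_pt (fun s => t + s) 0)
      by (apply continuity_pt_plus; [apply continuity_pt_const; intros ? ?; reflexivity| apply continuity_pt_id]).
    assert (Hcst : continuity_pt (fun _ : R => Lf 0) 0) by (apply continuity_pt_const; intros ? ?; reflexivity).
    assert (Hcst' : continuity_pt (fun _ : R => Kh 0) 0) by (apply continuity_pt_const; intros ? ?; reflexivity).
    assert (HLf : continuity_pt (fun s => Lf (t + s)) 0)
      by (apply continuity_pt_comp with (f1 := fun s => t + s); auto; apply weight_prim_cont, lam_pos).
    assert (HKh : continuity_pt (fun s => Kh (t + s)) 0)
      by (apply continuity_pt_comp with (f1 := fun s => t + s); auto; apply weight_prim_cont, lam_pos).
    apply continuity_pt_plus; [apply continuity_pt_plus|]; try apply continuity_pt_minus; auto.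
    apply continuity_pt_mult. apply continuity_pt_id.
    apply continuity_pt_comp with (f1 := fun s => t + s); auto. apply weight_cont.
Qed.

(* Summing up: m e^(-lam t) <= Q + N / 2, with Q = (T + 3) (2 + K) eps T, because
   lam >= 2 (T + 3) (2K + K^2). *)
Lemma weighted_step x t : inT T t -> m x t / exp (lam * t) <= (T + 3) * (2 + K) * eps * T + N / 2.
Proof.
  intros Ht. pose proof (w_bound x t Ht) as B1. pose proof (wx_bound x t Ht) as B2.
  pose proof (wt_bound x t Ht) as B3.
  pose proof (Lf_gain t (proj1 Ht)). pose proof (Kh_gain t (proj1 Ht)).
  pose proof K_nonneg as HK. pose proof eps_nonneg as He. pose proof lam_pos as Hl.
  pose proof (weight_prim_gain Af Bf lam t T Af_nonneg Bf_nonneg Hl Ht) as HLq.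
  pose proof (weight_prim_gain Ah Bh lam t T Ah_nonneg Bh_nonneg Hl Ht) as HKq.
  fold Lf Kh in HLq, HKq. unfold Af, Bf, Ah, Bh in HLq, HKq.
  unfold inT in Ht. set (E := exp (lam * t)) in *.
  assert (HE : 1 <= E) by (unfold E; rewrite <- exp_0; apply exp_mono; apply Rmult_le_pos; lra).
  set (Lq := Lf t - Lf 0) in *. set (Kq := Kh t - Kh 0) in *.
  assert (Hm : m x t <= (T + 3) * (Lq + Kq)).
  { unfold m. assert (t * (Lq + Kq) <= T * (Lq + Kq)) by (apply Rmult_le_compat_r; lra). lra. }
  set (R0 := (T + 3) * (2 * K + K * K)).
  assert (HR0 : 0 <= R0) by (unfold R0; nra).
  set (Q := (T + 3) * (2 + K) * eps * T).
  assert (HQ : 0 <= Q) by (unfold Q; apply Rmult_le_pos; [|lra]; apply Rmult_le_pos; [|lra]; nra).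
  assert (Hm2 : m x t <= Q + R0 * (N / lam) * E).
  { eapply Rle_trans. exact Hm.
    replace (Q + R0 * (N / lam) * E) with
      ((T + 3) * ((eps * T + K * N / lam * E) + ((1 + K) * eps * T + (K + K * K) * N / lam * E)))
      by (unfold Q, R0; field; lra).
    apply Rmult_le_compat_l; lra. }
  apply Rle_trans with ((Q + R0 * (N / lam) * E) / E).
  { unfold Rdiv. apply Rmult_le_compat_r. left; apply Rinv_0_lt_compat; lra. auto. }
  replace ((Q + R0 * (N / lam) * E) / E) with (Q / E + R0 * N / lam) by (field; lra).
  assert (Q / E <= Q).
  { unfold Rdiv. rewrite <- (Rmult_1_r Q) at 2. apply Rmult_le_compat_l; auto.
    rewrite <- Rinv_1. apply Rinv_le_contravar; lra. }
  assert (R0 * N / lam <= N / 2).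
  { assert (2 * R0 <= lam) by (unfold R0, lam, lamf; lra).
    apply Rmult_le_reg_r with lam; auto. unfold Rdiv.
    replace (R0 * N * / lam * lam) with (R0 * N) by (field; lra). nra. }
  lra.
Qed.

End WeightedStep.

(* m is bounded a priori (both solutions have M1 <= K), so the weighted sup is finite. *)
Lemma m_bound y tau : inT T tau -> 0 <= m y tau <= 2 * K.
Proof.
  intros Ht. pose proof (bound1 y tau Ht). pose proof (bound2 y tau Ht).
  unfold m, w, wx, wt, diff2.
  pose proof (Rabs_triang (u2 y tau) (- u1 y tau)). pose proof (Rabs_triang (u2x y tau) (- u1x y tau)).
  pose proof (Rabs_triang (u2t y tau) (- u1t y tau)). rewrite !Rabs_Ropp in *.
  pose proof (Rabs_pos (u2 y tau - u1 y tau)). pose proof (Rabs_pos (u2x y tau - u1x y tau)).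
  pose proof (Rabs_pos (u2t y tau - u1t y tau)). unfold Rminus in *. lra.
Qed.

Lemma least_weight : exists N, 0 <= N /\ (forall y tau, inT T tau -> m y tau <= N * exp (lam * tau)) /\
  forall N', (forall y tau, inT T tau -> m y tau / exp (lam * tau) <= N') -> N <= N'.
Proof.
  pose proof lam_pos as Hl.
  set (S := fun r => exists y tau, inT T tau /\ r = m y tau / exp (lam * tau)).
  assert (Hnn : forall y tau, inT T tau -> 0 <= m y tau / exp (lam * tau)).
  { intros y tau Ht. pose proof (m_bound y tau Ht). pose proof (exp_pos (lam * tau)).
    apply Rmult_le_pos. lra. left. apply Rinv_0_lt_compat. lra. }
  assert (Hle : forall y tau, inT T tau -> m y tau / exp (lam * tau) <= m y tau).
  { intros y tau Ht. pose proof (m_bound y tau Ht). unfold inT in Ht.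
    assert (1 <= exp (lam * tau)) by (rewrite <- exp_0; apply exp_mono; apply Rmult_le_pos; lra).
    unfold Rdiv. rewrite <- (Rmult_1_r (m y tau)) at 2. apply Rmult_le_compat_l. lra.
    rewrite <- Rinv_1. apply Rinv_le_contravar; lra. }
  assert (H00 : inT T 0) by (unfold inT; lra).
  destruct (completeness S) as [N [Hub Hlub]].
  { exists (2 * K). intros r [y [tau [Ht ->]]]. pose proof (Hle y tau Ht). pose proof (m_bound y tau Ht). lra. }
  { exists (m 0 0 / exp (lam * 0)). exists 0, 0. auto. }
  exists N. split; [|split].
  - eapply Rle_trans. apply (Hnn 0 0 H00). apply Hub. exists 0, 0. auto.
  - intros y tau Ht. assert (m y tau / exp (lam * tau) <= N) by (apply Hub; exists y, tau; auto).
    pose proof (exp_pos (lam * tau)).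
    apply Rmult_le_reg_r with (/ exp (lam * tau)). apply Rinv_0_lt_compat; auto.
    rewrite Rmult_assoc, Rinv_r, Rmult_1_r by lra. auto.
  - intros N' HN'. apply Hlub. intros r [y [tau [Ht ->]]]. auto.
Qed.

(* The main estimate: the least weight satisfies N <= Q + N/2, so N <= 2Q and
   m <= 2 Q e^(lam T) on the strip; each of the three sup norms is bounded by that. *)
Lemma main_estimate : M1 (diff2 u2 u1) (diff2 u2x u1x) (diff2 u2t u1t) T <= Cfun T K * T * eps.
Proof.
  pose proof K_nonneg as HK. pose proof eps_nonneg as He. pose proof lam_pos as Hl.
  destruct least_weight as [N [HN0 [HN Hleast]]].
  set (Q := (T + 3) * (2 + K) * eps * T).
  assert (HNQ : N <= 2 * Q).
  { assert (N <= Q + N / 2) by (apply Hleast; intros y tau Ht; apply (weighted_step N HN0 HN y tau Ht)). lra. }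
  assert (Hpt : forall y tau, inT T tau -> m y tau <= 2 * Q * exp (lam * T)).
  { intros y tau Ht. eapply Rle_trans. apply HN; auto. unfold inT in Ht.
    apply Rmult_le_compat; auto. left; apply exp_pos. apply exp_mono. apply Rmult_le_compat_l; lra. }
  assert (Each : forall g : R -> R -> R, (forall y tau, Rabs (g y tau) <= m y tau) ->
            M0 g T <= 2 * Q * exp (lam * T)).
  { intros g Hg. apply M0_le. lra. intros y tau Ht. eapply Rle_trans; [apply Hg|]. auto. }
  assert (EC : Cfun T K * T * eps = 6 * Q * exp (lam * T)).
  { unfold Cfun, Q, lam. rewrite Rmax_left by lra. rewrite (Rmax_left K 0) by lra. ring. }
  rewrite EC. unfold M1.
  assert (Bw : M0 w T <= 2 * Q * exp (lam * T)).
  { apply Each. intros y tau. pose proof (Rabs_pos (wx y tau)). pose proof (Rabs_pos (wt y tau)). unfold m. lra. }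
  assert (Bwx : M0 wx T <= 2 * Q * exp (lam * T)).
  { apply Each. intros y tau. pose proof (Rabs_pos (w y tau)). pose proof (Rabs_pos (wt y tau)). unfold m. lra. }
  assert (Bwt : M0 wt T <= 2 * Q * exp (lam * T)).
  { apply Each. intros y tau. pose proof (Rabs_pos (w y tau)). pose proof (Rabs_pos (wx y tau)). unfold m. lra. }
  unfold w, wx, wt in *. lra.
Qed.

End MainEstimate.

Theorem mainTheorem18 :
  exists C : R -> R -> R,
    (forall T K, 0 < C T K) /\
    (forall T T' K K', T <= T' -> K <= K' -> C T K <= C T' K') /\
    forall (T K eps : R)
      (F1 F1u F1p F1q F2 F2u F2p F2q : R -> R -> R -> R -> R -> R)
      (H1 H1t H1u H1tu H1uu H2 H2t H2u H2tu H2uu : R -> R -> R -> R)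
      (a b : R -> R)
      (u1 u1x u1t u2 u2x u2t : R -> R -> R),
    0 < T ->
    regF T F1 F1u F1p F1q -> regF T F2 F2u F2p F2q ->
    regH T H1 H1t H1u H1tu H1uu -> regH T H2 H2t H2u H2tu H2uu ->
    continuity a -> continuity b ->
    isC1 T u1 u1x u1t -> isC1 T u2 u2x u2t ->
    (forall x t, inT T t -> u1 x t = Iop a b (Fop F1 u1 u1x u1t) (Hop H1 u1) x t) ->
    (forall x t, inT T t -> u2 x t = Iop a b (Fop F2 u2 u2x u2t) (Hop H2 u2) x t) ->
    M1_le u1 u1x u1t T K -> M1_le u2 u2x u2t T K ->
    (forall x u, H1 x 0 u = H2 x 0 u) ->
    (forall x t u p q, inS5 T K x t u p q ->
       Rabs (F1u x t u p q) <= K /\ Rabs (F1p x t u p q) <= K /\ Rabs (F1q x t u p q) <= K) ->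
    (forall x t u, inS3 T K x t u ->
       Rabs (H1u x t u) <= K /\ Rabs (H1tu x t u) <= K /\ Rabs (H1uu x t u) <= K) ->
    (forall x t u p q, inS5 T K x t u p q -> Rabs (F2 x t u p q - F1 x t u p q) <= eps) ->
    (forall x t u, inS3 T K x t u ->
       Rabs (H2 x t u - H1 x t u) <= eps /\ Rabs (H2t x t u - H1t x t u) <= eps /\
       Rabs (H2u x t u - H1u x t u) <= eps) ->
    M1 (diff2 u2 u1) (diff2 u2x u1x) (diff2 u2t u1t) T <= C T K * T * eps.
Proof.
  exists Cfun. split; [exact Cfun_pos|]. split; [exact Cfun_mono|].
  intros T K eps F1 F1u F1p F1q F2 F2u F2p F2q H1 H1t H1u H1tu H1uu H2 H2t H2u H2tu H2uu a b
    u1 u1x u1t u2 u2x u2t HT rF1 rF2 rH1 rH2 _ _ C1 C2 E1 E2 Mb1 Mb2 H0 BF BH DF DH.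
  exact (main_estimate T K eps F1 F1u F1p F1q F2 F2u F2p F2q H1 H1t H1u H1tu H1uu H2 H2t H2u H2tu H2uu a b
    u1 u1x u1t u2 u2x u2t HT rF1 rF2 rH1 rH2 C1 C2 E1 E2 Mb1 Mb2 H0 BF BH DF DH).
Qed.
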